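(* The group $\mathrm{SL}(2,\mathbb{Z})\ltimes\mathbb{Z}^2$ (for the standard linear action of $\mathrm{SL}(2,\mathbb{Z})$ on $\mathbb{Z}^2$) embeds as a subgroup of the group of orientation-preserving homeomorphisms of the circle. Moreover, if $\mathbb{F}_2$ is a free subgroup of finite index in $\mathrm{SL}(2,\mathbb{Z})$, then $\mathbb{F}_2\ltimes\mathbb{Z}^2$ embeds as a subgroup of the group of orientation-preserving homeomorphisms of the interval $[0,1]$. *)

From Stdlib Require Import Reals ZArith List.
Open Scope R_scope.

Record M2 : Type := mkM2 { m11 : Z; m12 : Z; m21 : Z; m22 : Z }.

Definition M2mul (A B : M2) : M2 :=
  mkM2 (m11 A * m11 B + m12 A * m21 B)%Z (m11 A * m12 B + m12 A * m22 B)%Z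
       (m21 A * m11 B + m22 A * m21 B)%Z (m21 A * m12 B + m22 A * m22 B)%Z.

Definition M2one : M2 := mkM2 1 0 0 1.

Definition M2det (A : M2) : Z := (m11 A * m22 A - m12 A * m21 A)%Z.

(* inverse of a determinant-1 matrix *)
Definition M2inv (A : M2) : M2 := mkM2 (m22 A) (- m12 A)%Z (- m21 A)%Z (m11 A).

Definition inSL2Z (A : M2) : Prop := M2det A = 1%Z.

Definition actV (A : M2) (v : Z * Z) : Z * Z :=
  ((m11 A * fst v + m12 A * snd v)%Z, (m21 A * fst v + m22 A * snd v)%Z).

Definition Vadd (v w : Z * Z) : Z * Z := ((fst v + fst w)%Z, (snd v + snd w)%Z).

Definition sdmul (g h : M2 * (Z * Z)) : M2 * (Z * Z) :=
  (M2mul (fst g) (fst h), Vadd (snd g) (actV (fst g) (snd h))).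

Definition is_subgroup (H : M2 -> Prop) : Prop :=
  (forall A, H A -> inSL2Z A) /\ H M2one /\
  (forall A B, H A -> H B -> H (M2mul A B)) /\
  (forall A, H A -> H (M2inv A)).

Definition finite_index (H : M2 -> Prop) : Prop :=
  exists reps : list M2, forall A, inSL2Z A ->
    exists r B, In r reps /\ H B /\ A = M2mul r B.

(* words in two letters and their inverses: (letter, is_inverse),
   letter false = a, letter true = b *)
Definition letter := (bool * bool)%type.

Definition eval_letter (a b : M2) (l : letter) : M2 :=
  let x := if fst l then b else a in if snd l then M2inv x else x.

Fixpoint eval_word (a b : M2) (w : list letter) : M2 :=
  match w with
  | nil => M2one
  | l :: w' => M2mul (eval_letter a b l) (eval_word a b w')
  end.

Fixpoint reduced (w : list letter) : Prop :=
  match w with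
  | l1 :: ((l2 :: _) as w') =>
      ~ (fst l1 = fst l2 /\ snd l1 <> snd l2) /\ reduced w'
  | _ => True
  end.

Definition free_rank2_on (H : M2 -> Prop) (a b : M2) : Prop :=
  H a /\ H b /\
  (forall A, H A -> exists w, A = eval_word a b w) /\
  (forall w, w <> nil -> reduced w -> eval_word a b w <> M2one).

Definition free_rank2 (H : M2 -> Prop) : Prop := exists a b, free_rank2_on H a b.

(* An element of Homeo+(S^1), S^1 = R/Z, is represented by a lift f : R -> R:
   continuous, strictly increasing, f (x + 1) = f x + 1; two lifts represent the
   same circle homeomorphism iff they differ by an integer translation. *)
Definition circle_lift (f : R -> R) : Prop :=
  continuity f /\ (forall x y, x < y -> f x < f y) /\ (forall x, f (x + 1) = f x + 1).

Definition same_circle_map (f g : R -> R) : Prop :=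
  exists k : Z, forall x, f x = g x + IZR k.

Definition inI (x : R) : Prop := 0 <= x <= 1.

Definition interval_homeo (f : R -> R) : Prop :=
  (forall x, inI x -> inI (f x)) /\
  (forall y, inI y -> exists x, inI x /\ f x = y) /\
  (forall x y, inI x -> inI y -> x < y -> f x < f y) /\
  (forall x, inI x -> forall eps, eps > 0 -> exists delta, delta > 0 /\
      forall y, inI y -> Rabs (y - x) < delta -> Rabs (f y - f x) < eps).

(* The oriented lines of the lattice Z² with primitive direction form a countable set Y,
   cyclically ordered by direction and then linearly by position; SL(2,Z) ⋉ Z² acts on Y by
   affine maps, preserving this cyclic order.  Each affine map lifts to an automorphism of
   Z ×lex Y commuting with the shift, and on the free subgroup the lifts can be chosen to
   form a homomorphism.  Blowing every point of Y up into an arc of length 2^-(code+1),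
   a Denjoy-type construction, realizes these automorphisms as lifts of circle
   homeomorphisms (respectively as homeomorphisms of R, which is then conjugated onto
   (0, 1)); the midpoints of the arcs make the realization faithful. *)

From Stdlib Require Import Reals ZArith List Lia Lra Bool Setoid Morphisms.
From Stdlib Require Import ClassicalEpsilon ProofIrrelevance.
From Stdlib Require Cantor.
From Coquelicot Require Import Coquelicot.
Import ListNotations.
Set Bullet Behavior "Strict Subproofs".
Open Scope R_scope.

(** * Countable linear orders and weighted sums *)

Record CountableOrder := {
  elt :> Type;
  olt : elt -> elt -> Prop;
  code : elt -> nat;
  code_inj : forall x y, code x = code y -> x = y;
  olt_irrefl : forall x, ~ olt x x;
  olt_trans : forall x y z, olt x y -> olt y z -> olt x z;
  olt_total : forall x y, olt x y \/ x = y \/ olt y x;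
  some_elt : elt }.

Arguments olt {c} _ _.
Arguments code {c} _.
Arguments code_inj {c} _ _ _.
Arguments olt_irrefl {c} _ _.
Arguments olt_trans {c} _ _ _ _ _.
Arguments olt_total {c} _ _.
Notation "x ≺ y" := (olt x y) (at level 70, no associativity).

Definition dual_order (Y : CountableOrder) : CountableOrder :=
  {| elt := Y; olt := fun x y => y ≺ x; code := code; code_inj := code_inj;
     olt_irrefl := olt_irrefl;
     olt_trans := fun x y z Hxy Hyz => olt_trans z y x Hyz Hxy;
     olt_total := fun x y => match olt_total y x with
                           | or_introl h => or_introl h
                           | or_intror (or_introl e) => or_intror (or_introl (eq_sym e))
                           | or_intror (or_intror h) => or_intror (or_intror h) end;
     some_elt := some_elt Y |}.

Lemma finite_max (Y : CountableOrder) (P : Y -> Prop) N :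
  (forall y, P y -> (code y < N)%nat -> False) \/
  (exists y, P y /\ (code y < N)%nat /\
     forall z, P z -> (code z < N)%nat -> z = y \/ z ≺ y).
Proof.
  induction N as [|N IH]; [left; intros; lia|].
  assert (Hcode : forall y z : Y, code y = N -> code z = N -> z = y)
    by (intros y z Hy Hz; apply code_inj; congruence).
  destruct (classic (exists y, P y /\ code y = N)) as [[y [Hy Hc]]|Hn].
  - right. destruct IH as [IH|[x [Hx [Hxc Hxm]]]].
    + exists y. split; [auto | split; [lia|]]. intros z Hz Hzc.
      destruct (Nat.eq_dec (code z) N); [left; auto | exfalso; apply (IH z); auto; lia].
    + destruct (olt_total x y) as [h|[h|h]]; [| subst; lia |].
      * exists y. split; [auto | split; [lia|]]. intros z Hz Hzc.
        destruct (Nat.eq_dec (code z) N); [left; auto|].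
        destruct (Hxm z Hz ltac:(lia)) as [->|h']; right; eauto using olt_trans.
      * exists x. split; [auto | split; [lia|]]. intros z Hz Hzc.
        destruct (Nat.eq_dec (code z) N); [right; now rewrite (Hcode y z) | apply Hxm; auto; lia].
  - destruct IH as [IH|[x [Hx [Hxc Hxm]]]].
    + left. intros y Hy Hyc.
      destruct (Nat.eq_dec (code y) N); [apply Hn; eauto | apply (IH y); auto; lia].
    + right. exists x. split; [auto | split; [lia|]]. intros z Hz Hzc.
      destruct (Nat.eq_dec (code z) N); [exfalso; apply Hn; eauto | apply Hxm; auto; lia].
Qed.

Lemma finite_min (Y : CountableOrder) (P : Y -> Prop) N :
  (forall y, P y -> (code y < N)%nat -> False) \/
  (exists y, P y /\ (code y < N)%nat /\
     forall z, P z -> (code z < N)%nat -> z = y \/ y ≺ z).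
Proof. exact (finite_max (dual_order Y) P N). Qed.

Definition weight (n : nat) : R := (/2) ^ S n.

Lemma weight_pos n : 0 < weight n.
Proof. apply pow_lt; lra. Qed.

Lemma is_series_weight : is_series weight 1.
Proof.
  unfold weight. apply is_series_ext with (a := fun n => (/2) ^ n * /2); [intro n; simpl; ring|].
  replace 1 with (/ (1 - /2) * /2) by field.
  apply is_series_scal_r, is_series_geom. rewrite Rabs_pos_eq; lra.
Qed.

Lemma ex_series_weight : ex_series weight.
Proof. exists 1. exact is_series_weight. Qed.

Lemma Series_ge_term (a : nat -> R) n :
  ex_series a -> (forall k, 0 <= a k) -> a n <= Series a.
Proof.
  intros Ha Hpos. rewrite (Series_incr_n a (S n)) by (lia || auto). simpl pred.
  assert (a n <= sum_f_R0 a n).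
  { destruct n as [|n]; simpl; [lra|]. pose proof (cond_pos_sum a n Hpos). lra. }
  assert (0 <= Series (fun k => a (S n + k)%nat)).
  { rewrite <- (Rmult_0_l (Series (fun k => a (S n + k)%nat))), <- Series_scal_l.
    apply Series_le.
    - intro k. rewrite Rmult_0_l. split; [lra | apply Hpos].
    - exact (proj1 (ex_series_incr_n a (S n)) Ha). }
  lra.
Qed.

Lemma Series_dirac n0 c : Series (fun n => if Nat.eq_dec n n0 then c else 0) = c.
Proof.
  assert (Htail : forall k, (if Nat.eq_dec (S n0 + k) n0 then c else 0) = 0 * 0).
  { intro k. destruct Nat.eq_dec; [lia | ring]. }
  assert (Hpartial : forall m, sum_f_R0 (fun n => if Nat.eq_dec n n0 then c else 0) m
                               = if le_lt_dec n0 m then c else 0).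
  { induction m as [|m IH]; cbn [sum_f_R0].
    - destruct (Nat.eq_dec 0 n0), (le_lt_dec n0 0); try lia; auto.
    - rewrite IH. destruct (Nat.eq_dec (S m) n0), (le_lt_dec n0 m), (le_lt_dec n0 (S m));
        try lia; lra. }
  rewrite (Series_incr_n _ (S n0)); [| lia |].
  - rewrite (Series_ext _ _ Htail), Series_scal_l. simpl pred. rewrite Hpartial.
    destruct le_lt_dec; [ring | lia].
  - apply (ex_series_incr_n _ (S n0)), (ex_series_ext (fun _ => 0 * 0)).
    + intro k. now rewrite Htail.
    + apply (ex_series_ext (fun n => weight n * 0)); [intro; simpl; ring|].
      apply ex_series_scal_r, ex_series_weight.
Qed.

Lemma pow_half_lt e : 0 < e -> exists N, (/2) ^ N < e.
Proof.
  intro He.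
  destruct (pow_lt_1_zero (/2)) with (y := e) as [N HN]; [rewrite Rabs_pos_eq; lra | lra |].
  exists N. specialize (HN N (le_n N)). rewrite Rabs_pos_eq in HN; [lra|].
  left; apply pow_lt; lra.
Qed.

Definition indic {T} (P : T -> Prop) (y : T) : R :=
  if excluded_middle_informative (P y) then 1 else 0.

Lemma indic_range {T} (P : T -> Prop) y : 0 <= indic P y <= 1.
Proof. unfold indic. destruct excluded_middle_informative; lra. Qed.

Lemma indic_true {T} (P : T -> Prop) y : P y -> indic P y = 1.
Proof. unfold indic. destruct excluded_middle_informative; tauto. Qed.

Lemma indic_false {T} (P : T -> Prop) y : ~ P y -> indic P y = 0.
Proof. unfold indic. destruct excluded_middle_informative; tauto. Qed.

Lemma Int_part_bounds r : IZR (Int_part r) <= r < IZR (Int_part r) + 1.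
Proof. pose proof (base_Int_part r). lra. Qed.

Lemma Int_part_unique r k : IZR k <= r < IZR k + 1 -> Int_part r = k.
Proof. intro H. symmetry. apply Int_part_spec. lra. Qed.

Lemma IZR_lt_succ (a b : Z) : IZR a < IZR b -> IZR a + 1 <= IZR b.
Proof. intro H. apply lt_IZR in H. rewrite <- plus_IZR. apply IZR_le. lia. Qed.

Lemma div_ge_1 a b : 0 < b -> b <= a -> 1 <= a / b.
Proof.
  intros. apply (Rmult_le_reg_r b); auto. unfold Rdiv. rewrite Rmult_assoc, Rinv_l, Rmult_1_r; lra.
Qed.

Lemma div_nonneg a b : 0 < b -> 0 <= a -> 0 <= a / b.
Proof. intros. apply Rmult_le_pos; auto. left; now apply Rinv_0_lt_compat. Qed.

Section Realization.

Variable Y : CountableOrder.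

Definition decode (n : nat) : option Y :=
  match excluded_middle_informative (exists y : Y, code y = n) with
  | left H => Some (proj1_sig (constructive_indefinite_description _ H))
  | right _ => None
  end.

Lemma decode_code (y : Y) : decode (code y) = Some y.
Proof.
  unfold decode. destruct excluded_middle_informative as [H|H]; [|exfalso; eauto].
  destruct constructive_indefinite_description as [z Hz]. simpl. f_equal. now apply code_inj.
Qed.

Lemma decode_some n (y : Y) : decode n = Some y -> code y = n.
Proof.
  unfold decode. destruct excluded_middle_informative as [H|H]; [|discriminate].
  destruct constructive_indefinite_description as [z Hz]. simpl. now intros [= <-].
Qed.

(* The point [y] carries the weight [weight (code y)]; the weights sum to at most 1. *)
Definition wterm (f : Y -> R) (n : nat) : R :=
  match decode n with Some y => weight n * f y | None => 0 end.

Definition wsum (f : Y -> R) : R := Series (wterm f).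

Definition bounded (f : Y -> R) := exists B, forall y, Rabs (f y) <= B.

Lemma ex_series_wterm f : bounded f -> ex_series (wterm f).
Proof.
  intros [B HB].
  apply (@ex_series_le R_AbsRing R_CompleteNormedModule) with (b := fun n => B * weight n).
  - intro n. change (norm (wterm f n)) with (Rabs (wterm f n)). unfold wterm.
    pose proof (weight_pos n). destruct (decode n) as [y|].
    + rewrite Rabs_mult, (Rabs_pos_eq (weight n)) by lra. rewrite Rmult_comm.
      apply Rmult_le_compat_r; [lra | apply HB].
    + rewrite Rabs_R0. pose proof (HB (some_elt Y)). pose proof (Rabs_pos (f (some_elt Y))). nra.
  - apply (ex_series_ext (fun n => weight n * B)); [intro; simpl; ring|].
    apply ex_series_scal_r, ex_series_weight.
Qed.

Lemma bounded_plus f g : bounded f -> bounded g -> bounded (fun y => f y + g y).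
Proof.
  intros [A HA] [B HB]. exists (A + B). intro y.
  pose proof (Rabs_triang (f y) (g y)). pose proof (HA y). pose proof (HB y). lra.
Qed.

Lemma bounded_scal c f : bounded f -> bounded (fun y => c * f y).
Proof.
  intros [A HA]. exists (Rabs c * A). intro y. rewrite Rabs_mult.
  apply Rmult_le_compat_l; [apply Rabs_pos | apply HA].
Qed.

Lemma bounded_const c : bounded (fun _ => c).
Proof. exists (Rabs c). intro; lra. Qed.

Lemma bounded_opp f : bounded f -> bounded (fun y => - f y).
Proof. intros [A HA]. exists A. intro y. rewrite Rabs_Ropp. apply HA. Qed.

Lemma bounded_indic (P : Y -> Prop) : bounded (indic P).
Proof.
  exists 1. intro y. pose proof (indic_range P y). rewrite Rabs_pos_eq; lra.
Qed.

Lemma wsum_ext f g : (forall y, f y = g y) -> wsum f = wsum g.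
Proof.
  intro H. apply Series_ext. intro n. unfold wterm. destruct (decode n); [now rewrite H | auto].
Qed.

Lemma wsum_plus f g : bounded f -> bounded g -> wsum (fun y => f y + g y) = wsum f + wsum g.
Proof.
  intros Hf Hg. unfold wsum. rewrite <- Series_plus by (apply ex_series_wterm; auto).
  apply Series_ext. intro n. unfold wterm. destruct (decode n); ring.
Qed.

Lemma wsum_scal c f : wsum (fun y => c * f y) = c * wsum f.
Proof.
  unfold wsum. rewrite <- Series_scal_l. apply Series_ext. intro n. unfold wterm.
  destruct (decode n); ring.
Qed.

Lemma wsum_opp f : wsum (fun y => - f y) = - wsum f.
Proof. rewrite (wsum_ext _ (fun y => -1 * f y)) by (intro; ring). rewrite wsum_scal. ring. Qed.

Lemma wsum_minus f g : bounded f -> bounded g -> wsum (fun y => f y - g y) = wsum f - wsum g.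
Proof.
  intros Hf Hg. unfold Rminus. rewrite wsum_plus, wsum_opp; auto using bounded_opp.
Qed.

Lemma wsum_const c : wsum (fun _ => c) = c * wsum (fun _ => 1).
Proof. rewrite (wsum_ext _ (fun _ => c * 1)) by (intro; ring). apply wsum_scal. Qed.

Lemma wsum_nonneg f : bounded f -> (forall y, 0 <= f y) -> 0 <= wsum f.
Proof.
  intros Hb H. unfold wsum. rewrite <- (Rmult_0_l (Series (wterm f))), <- Series_scal_l.
  apply Series_le; [|now apply ex_series_wterm].
  intro n. unfold wterm. pose proof (weight_pos n).
  destruct (decode n) as [y|]; [pose proof (H y)|]; split; nra.
Qed.

Lemma wsum_le f g : bounded f -> bounded g -> (forall y, f y <= g y) -> wsum f <= wsum g.
Proof.
  intros Hf Hg H. cut (0 <= wsum (fun y => g y - f y)); [rewrite wsum_minus; auto; lra|].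
  apply wsum_nonneg; [now apply bounded_plus, bounded_opp | intro y; pose proof (H y); lra].
Qed.

Lemma wsum_ge_point f y :
  bounded f -> (forall z, 0 <= f z) -> weight (code y) * f y <= wsum f.
Proof.
  intros Hb Hpos. replace (weight (code y) * f y) with (wterm f (code y))
    by (unfold wterm; now rewrite decode_code).
  apply Series_ge_term; [now apply ex_series_wterm|].
  intro k. unfold wterm. pose proof (weight_pos k).
  destruct (decode k) as [z|]; [pose proof (Hpos z); nra | lra].
Qed.

Lemma wsum_pos f y : bounded f -> (forall z, 0 <= f z) -> 0 < f y -> 0 < wsum f.
Proof.
  intros Hb Hpos Hy. pose proof (wsum_ge_point f y Hb Hpos). pose proof (weight_pos (code y)). nra.
Qed.

Lemma wsum_partial_le f N :
  bounded f -> (forall y, 0 <= f y) -> sum_f_R0 (wterm f) N <= wsum f.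
Proof.
  intros Hb Hpos. pose proof (Series_correct _ (ex_series_wterm f Hb)) as Hc.
  apply is_series_Reals in Hc. apply sum_incr; auto.
  intro n. unfold wterm. pose proof (weight_pos n).
  destruct (decode n) as [y|]; [pose proof (Hpos y); nra | lra].
Qed.

Lemma wsum_le_of_partial f t :
  bounded f -> (forall N, sum_f_R0 (wterm f) N <= t) -> wsum f <= t.
Proof.
  intros Hb H. pose proof (Series_correct _ (ex_series_wterm f Hb)) as Hc.
  apply is_series_Reals in Hc.
  assert (Hconst : Un_cv (fun _ : nat => t) t).
  { intros e He. exists 0%nat. intros. unfold Rdist. rewrite Rminus_eq_0, Rabs_R0. lra. }
  exact (Rle_cv_lim H Hc Hconst).
Qed.

Definition mass (P : Y -> Prop) := wsum (indic P).
Definition total_mass := wsum (fun _ => 1).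
Definition atom (y : Y) := weight (code y).

Lemma mass_nonneg P : 0 <= mass P.
Proof. apply wsum_nonneg; [apply bounded_indic | intro; apply indic_range]. Qed.

Lemma mass_ext (P Q : Y -> Prop) : (forall y, P y <-> Q y) -> mass P = mass Q.
Proof.
  intro H. apply wsum_ext. intro y. unfold indic.
  destruct (excluded_middle_informative (P y)), (excluded_middle_informative (Q y)); firstorder.
Qed.

Lemma mass_mono (P Q : Y -> Prop) : (forall y, P y -> Q y) -> mass P <= mass Q.
Proof.
  intro H. apply wsum_le; try apply bounded_indic. intro y. unfold indic.
  destruct (excluded_middle_informative (P y)), (excluded_middle_informative (Q y)); firstorder lra.
Qed.

Lemma mass_split (P Q : Y -> Prop) :
  mass P = mass (fun y => P y /\ Q y) + mass (fun y => P y /\ ~ Q y).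
Proof.
  unfold mass. rewrite <- wsum_plus by apply bounded_indic. apply wsum_ext. intro y. unfold indic.
  destruct (excluded_middle_informative (P y)), (excluded_middle_informative (Q y)),
    (excluded_middle_informative (P y /\ Q y)), (excluded_middle_informative (P y /\ ~ Q y));
    tauto || lra.
Qed.

Lemma mass_union_le (A B C : Y -> Prop) :
  (forall y, A y -> B y \/ C y) -> mass A <= mass B + mass C.
Proof.
  intro H. unfold mass. rewrite <- wsum_plus by apply bounded_indic.
  apply wsum_le; [apply bounded_indic | apply bounded_plus; apply bounded_indic |].
  intro y. unfold indic.
  destruct (excluded_middle_informative (A y)), (excluded_middle_informative (B y)),
    (excluded_middle_informative (C y)); try lra. destruct (H y); tauto.
Qed.

Lemma mass_disjoint_union (P Q : Y -> Prop) :
  (forall y, ~ (P y /\ Q y)) -> mass (fun y => P y \/ Q y) = mass P + mass Q.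
Proof.
  intro H. rewrite (mass_split _ P). f_equal; apply mass_ext; intro y; specialize (H y); tauto.
Qed.

Lemma mass_full : mass (fun _ => True) = total_mass.
Proof. apply wsum_ext. intro. now apply indic_true. Qed.

Lemma mass_single y : mass (fun z => z = y) = atom y.
Proof.
  unfold mass, wsum, atom. rewrite <- (Series_dirac (code y) (weight (code y))).
  apply Series_ext. intro n. unfold wterm. destruct (decode n) as [z|] eqn:E.
  - apply decode_some in E. subst n. destruct Nat.eq_dec as [e|e].
    + apply code_inj in e. subst. rewrite indic_true; auto. ring.
    + rewrite indic_false; [ring | now intros ->].
  - destruct Nat.eq_dec; auto. subst. now rewrite decode_code in E.
Qed.

Lemma atom_pos y : 0 < atom y.
Proof. apply weight_pos. Qed.

Lemma total_mass_pos : 0 < total_mass.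
Proof. apply (wsum_pos _ (some_elt Y)); [apply bounded_const | intro; lra | lra]. Qed.

Lemma mass_code_tail N : mass (fun y => (N <= code y)%nat) <= (/2) ^ N.
Proof.
  set (tail := fun n => if le_lt_dec N n then weight n else 0).
  assert (Htail : Series tail = (/2) ^ N).
  { unfold tail. rewrite (Series_incr_n_aux _ N); [| intros k Hk; destruct le_lt_dec; lia || auto].
    rewrite (Series_ext _ (fun k => (/2) ^ N * weight k)).
    - rewrite Series_scal_l, (is_series_unique _ _ is_series_weight). ring.
    - intro k. destruct le_lt_dec; [|lia]. unfold weight. rewrite <- pow_add. f_equal. lia. }
  unfold mass, wsum. rewrite <- Htail. apply Series_le.
  - intro n. unfold wterm, tail. pose proof (weight_pos n). destruct (decode n) as [y|] eqn:E.
    + apply decode_some in E. pose proof (indic_range (fun y => (N <= code y)%nat) y).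
      destruct le_lt_dec; [split; nra|]. rewrite indic_false by lia. lra.
    + destruct le_lt_dec; lra.
  - apply (@ex_series_le R_AbsRing R_CompleteNormedModule) with (b := weight);
      [|apply ex_series_weight].
    intro n. change (norm (tail n)) with (Rabs (tail n)). unfold tail. pose proof (weight_pos n).
    destruct le_lt_dec; rewrite ?Rabs_R0, ?Rabs_pos_eq; lra.
Qed.


(** * Blowing up the points of [Y] into arcs *)

Definition mass_below (y : Y) := mass (fun z => z ≺ y).
Definition mass_above (y : Y) := mass (fun z => y ≺ z).

Lemma total_mass_split y : total_mass = mass_below y + atom y + mass_above y.
Proof.
  rewrite <- mass_full. unfold mass_below, mass_above. rewrite <- mass_single.
  rewrite <- !mass_disjoint_union.
  - apply mass_ext. intro z. destruct (olt_total z y) as [h|[h|h]]; tauto.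
  - intros z [[h|h] h']; subst; eapply olt_irrefl; eauto using olt_trans.
  - intros z [h h']; subst; eapply olt_irrefl; eauto.
Qed.

Lemma mass_below_atom_le y : mass_below y + atom y <= total_mass.
Proof.
  rewrite (total_mass_split y). pose proof (mass_nonneg (fun z => y ≺ z)). unfold mass_above. lra.
Qed.

Lemma mass_below_lt y z : y ≺ z -> mass_below y + atom y <= mass_below z.
Proof.
  intro H. unfold mass_below. rewrite <- mass_single, <- mass_disjoint_union.
  - apply mass_mono. intros u [Hu|Hu]; subst; eauto using olt_trans.
  - intros u [Hu Hu']; subst; eapply olt_irrefl; eauto.
Qed.

Lemma mass_below_le y : mass (fun z => z ≺ y \/ z = y) = mass_below y + atom y.
Proof.
  rewrite mass_disjoint_union, mass_single; auto.
  intros z [h e]; subst; eapply olt_irrefl; eauto.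
Qed.

Definition step3 y (al be ga : R) (z : Y) : R :=
  al * indic (fun u => u ≺ y) z + be * indic (fun u => u = y) z + ga * indic (fun u => y ≺ u) z.

Lemma bounded_step3 y al be ga : bounded (step3 y al be ga).
Proof. repeat apply bounded_plus; apply bounded_scal, bounded_indic. Qed.

Lemma wsum_step3 y al be ga :
  wsum (step3 y al be ga) = al * mass_below y + be * atom y + ga * mass_above y.
Proof.
  unfold step3. rewrite !wsum_plus, !wsum_scal, <- mass_single; [reflexivity|..].
  all: repeat apply bounded_plus; apply bounded_scal, bounded_indic.
Qed.

Lemma step3_lt y al be ga z : z ≺ y -> step3 y al be ga z = al.
Proof.
  intro h. unfold step3. rewrite indic_true, !indic_false by
    (auto; intro; subst; eapply olt_irrefl; eauto using olt_trans). ring.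
Qed.

Lemma step3_eq y al be ga : step3 y al be ga y = be.
Proof.
  unfold step3. rewrite (indic_true (fun u => u = y)), !indic_false by (auto; apply olt_irrefl).
  ring.
Qed.

Lemma step3_gt y al be ga z : y ≺ z -> step3 y al be ga z = ga.
Proof.
  intro h. unfold step3. rewrite (indic_true (fun u => y ≺ u)), !indic_false by
    (auto; intro; subst; eapply olt_irrefl; eauto using olt_trans). ring.
Qed.

(* Realization of [Z ×lex Y] in [R]: the period [[0, total_mass)] is cut into the arcs
   [[mass_below y, mass_below y + atom y)], one per [y], and [coord y t] measures, in
   periods, how much of the translates of the arc of [y] lies below [t]. *)
Definition coord (y : Y) (t : R) : R :=
  let k := Int_part ((t - mass_below y) / total_mass) in
  IZR k + Rmin 1 ((t - mass_below y - IZR k * total_mass) / atom y).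

Lemma coord_eq y t j r :
  t - mass_below y = IZR j * total_mass + r -> 0 <= r < total_mass ->
  coord y t = IZR j + Rmin 1 (r / atom y).
Proof.
  intros E Hr. pose proof total_mass_pos.
  assert (Hj : Int_part ((t - mass_below y) / total_mass) = j).
  { apply Int_part_unique. rewrite E. split.
    - apply (Rmult_le_reg_r total_mass); auto. field_simplify; lra.
    - apply (Rmult_lt_reg_r total_mass); auto. field_simplify; lra. }
  unfold coord. rewrite Hj. do 3 f_equal. lra.
Qed.

Lemma coord_decomp y t :
  exists j r, t - mass_below y = IZR j * total_mass + r /\ 0 <= r < total_mass.
Proof.
  pose proof total_mass_pos. set (q := (t - mass_below y) / total_mass).
  destruct (Int_part_bounds q) as [H1 H2].
  exists (Int_part q), (t - mass_below y - IZR (Int_part q) * total_mass).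
  split; [ring|]. unfold q in *. split.
  - apply (Rmult_le_compat_r total_mass) in H1; [|lra]. field_simplify in H1; lra.
  - apply (Rmult_lt_compat_r total_mass) in H2; [|lra]. field_simplify in H2; lra.
Qed.

Lemma coord_base y t : 0 <= t < total_mass ->
  coord y t = if Rle_dec (mass_below y) t then Rmin 1 ((t - mass_below y) / atom y) else 0.
Proof.
  intro Ht. pose proof (mass_below_atom_le y). pose proof (mass_nonneg (fun z => z ≺ y)).
  pose proof (atom_pos y). fold (mass_below y) in *. destruct Rle_dec.
  - rewrite (coord_eq y t 0 (t - mass_below y)); simpl; [ring | ring | lra].
  - rewrite (coord_eq y t (-1) (t - mass_below y + total_mass)); [| simpl; ring | lra].
    rewrite Rmin_left; [simpl; ring|]. apply div_ge_1; lra.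
Qed.

Lemma coord_shift y t k : coord y (t + IZR k * total_mass) = IZR k + coord y t.
Proof.
  destruct (coord_decomp y t) as [j [r [E Hr]]].
  rewrite (coord_eq y t j r E Hr), (coord_eq y _ (j + k) r); rewrite ?plus_IZR; [ring | lra | auto].
Qed.

Lemma coord_mono y t1 t2 : t1 <= t2 -> coord y t1 <= coord y t2.
Proof.
  intro Ht. pose proof total_mass_pos. pose proof (atom_pos y).
  destruct (coord_decomp y t1) as [j1 [r1 [E1 H1]]].
  destruct (coord_decomp y t2) as [j2 [r2 [E2 H2]]].
  rewrite (coord_eq y t1 j1 r1 E1 H1), (coord_eq y t2 j2 r2 E2 H2).
  assert (0 <= r1 / atom y) by (apply div_nonneg; lra).
  assert (0 <= r2 / atom y) by (apply div_nonneg; lra).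
  pose proof (Rmin_r 1 (r1 / atom y)). pose proof (Rmin_l 1 (r2 / atom y)).
  destruct (Z.lt_trichotomy j1 j2) as [l|[<-|l]]; apply IZR_lt in l || idtac.
  - apply IZR_lt_succ in l. unfold Rmin in *. destruct Rle_dec, Rle_dec; lra.
  - apply Rplus_le_compat_l.
    assert (r1 / atom y <= r2 / atom y)
      by (apply Rmult_le_compat_r; [left; apply Rinv_0_lt_compat|]; lra).
    unfold Rmin. destruct Rle_dec, Rle_dec; lra.
  - exfalso. apply IZR_lt_succ in l.
    assert (IZR j1 * total_mass >= (IZR j2 + 1) * total_mass)
      by (apply Rle_ge, Rmult_le_compat_r; lra). nra.
Qed.

(* The families [fun y => coord y t] are exactly the coherent ones (see [coord_wsum] and
   [wsum_coord]): for [y ≺ z] both values lie in one unit window, [c z <= c y], and at most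
   one of them is strictly inside it. *)
Definition coherent (c : Y -> R) := forall y z, y ≺ z ->
  exists n : Z, IZR n <= c z /\ c z <= c y /\ c y <= IZR n + 1 /\ (c y = IZR n + 1 \/ c z = IZR n).

Lemma coherent_bounded c : coherent c -> bounded c.
Proof.
  intro H. exists (Rabs (c (some_elt Y)) + 1). intro y.
  destruct (olt_total y (some_elt Y)) as [h|[->|h]]; [| lra |];
    destruct (H _ _ h) as [n Hn]; unfold Rabs; destruct Rcase_abs, Rcase_abs; lra.
Qed.

Lemma coord_coherent t : coherent (fun y => coord y t).
Proof.
  intros y z Hyz. pose proof total_mass_pos.
  pose proof (mass_below_lt y z Hyz). pose proof (mass_below_atom_le z).
  pose proof (mass_nonneg (fun u => u ≺ y)). fold (mass_below y) in *.
  pose proof (atom_pos y). pose proof (atom_pos z).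
  destruct (coord_decomp y t) as [j [r [E Hr]]]. rewrite (coord_eq y t j r E Hr). exists j.
  destruct (Rle_dec (mass_below z - mass_below y) r).
  - rewrite (coord_eq z t j (r - (mass_below z - mass_below y))) by lra.
    rewrite (Rmin_left 1 (r / atom y)) by (apply div_ge_1; lra).
    assert (0 <= (r - (mass_below z - mass_below y)) / atom z) by (apply div_nonneg; lra).
    pose proof (Rmin_l 1 ((r - (mass_below z - mass_below y)) / atom z)).
    unfold Rmin in *. destruct Rle_dec; lra.
  - rewrite (coord_eq z t (j - 1) (r - (mass_below z - mass_below y) + total_mass))
      by (rewrite ?minus_IZR; lra).
    rewrite (Rmin_left 1 (_ / atom z)) by (apply div_ge_1; lra).
    assert (0 <= r / atom y) by (apply div_nonneg; lra).
    pose proof (Rmin_l 1 (r / atom y)). rewrite minus_IZR.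
    unfold Rmin in *. destruct Rle_dec; lra.
Qed.

Lemma wsum_shift c k : bounded c -> wsum (fun y => IZR k + c y) = IZR k * total_mass + wsum c.
Proof. intro. rewrite wsum_plus, wsum_const; auto using bounded_const. Qed.

Lemma coord_at y k th : 0 <= th < 1 ->
  coord y (IZR k * total_mass + mass_below y + th * atom y) = IZR k + th.
Proof.
  intro Hth. pose proof (atom_pos y). pose proof (mass_below_atom_le y).
  pose proof (mass_nonneg (fun z => z ≺ y)). fold (mass_below y) in *.
  rewrite (coord_eq y _ k (th * atom y)); [| ring | split; nra].
  rewrite Rmin_right; [field; lra|]. unfold Rdiv. rewrite Rmult_assoc, Rinv_r, Rmult_1_r; lra.
Qed.

Lemma coord_between y k t :
  IZR k * total_mass - mass_above y <= t <= IZR k * total_mass + mass_below y ->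
  coord y t = IZR k.
Proof.
  intro Ht. pose proof (atom_pos y). pose proof (total_mass_split y).
  pose proof (mass_nonneg (fun z => y ≺ z)). fold (mass_above y) in *.
  destruct (Req_dec (t - mass_below y) (IZR k * total_mass)) as [E|E].
  - rewrite (coord_eq y t k 0); [| lra | lra]. unfold Rdiv. rewrite Rmult_0_l, Rmin_right; lra.
  - rewrite (coord_eq y t (k - 1) (t - mass_below y - IZR (k - 1) * total_mass));
      [| ring | rewrite minus_IZR; lra].
    rewrite Rmin_left; [rewrite minus_IZR; ring|]. apply div_ge_1; [lra|]. rewrite minus_IZR. lra.
Qed.

Lemma coherent_before c y z : coherent c -> z ≺ y ->
  c y <= c z <= IZR (Int_part (c y)) + 1 /\
  (c y <> IZR (Int_part (c y)) -> c z = IZR (Int_part (c y)) + 1).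
Proof.
  intros Hc h. set (k := Int_part (c y)). destruct (Int_part_bounds (c y)) as [Hk1 Hk2].
  fold k in Hk1, Hk2.
  destruct (Hc _ _ h) as [n [H1 [H2 [H3 H4]]]].
  assert (Hn : n = k \/ n = (k - 1)%Z).
  { assert (IZR n < IZR (k + 1)) by (rewrite plus_IZR; lra).
    assert (IZR k < IZR (n + 1 + 1)) by (rewrite !plus_IZR; lra).
    apply lt_IZR in H. apply lt_IZR in H0. lia. }
  destruct Hn as [->| ->]; rewrite ?minus_IZR in *; split; try lra;
    intro Hi; destruct H4; lra.
Qed.

Lemma coherent_after c y z : coherent c -> y ≺ z ->
  IZR (Int_part (c y)) - 1 <= c z <= c y /\
  (c y <> IZR (Int_part (c y)) -> c z = IZR (Int_part (c y))).
Proof.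
  intros Hc h. set (k := Int_part (c y)). destruct (Int_part_bounds (c y)) as [Hk1 Hk2].
  fold k in Hk1, Hk2.
  destruct (Hc _ _ h) as [n [H1 [H2 [H3 H4]]]].
  assert (Hn : n = k \/ n = (k - 1)%Z).
  { assert (IZR n < IZR (k + 1)) by (rewrite plus_IZR; lra).
    assert (IZR k < IZR (n + 1 + 1)) by (rewrite !plus_IZR; lra).
    apply lt_IZR in H. apply lt_IZR in H0. lia. }
  destruct Hn as [->| ->]; rewrite ?minus_IZR in *; split; try lra;
    intro Hi; destruct H4; lra.
Qed.

Lemma coord_wsum c y : coherent c -> coord y (wsum c) = c y.
Proof.
  intro Hc. pose proof (coherent_bounded c Hc) as Hb. pose proof (total_mass_split y) as Hsplit.
  set (k := Int_part (c y)). destruct (Int_part_bounds (c y)) as [Hk1 Hk2]. fold k in Hk1, Hk2.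
  destruct (Req_dec (c y) (IZR k)) as [Hi|Hi].
  - assert (Hbounds : forall z, step3 y (IZR k) (IZR k) (IZR k - 1) z <= c z <=
                                 step3 y (IZR k + 1) (IZR k) (IZR k) z).
    { intro z. destruct (olt_total z y) as [h|[->|h]].
      - rewrite !step3_lt by auto.
        destruct (coherent_before c y z Hc h) as [Hz _]. fold k in Hz. lra.
      - rewrite !step3_eq. lra.
      - rewrite !step3_gt by auto.
        destruct (coherent_after c y z Hc h) as [Hz _]. fold k in Hz. lra. }
    rewrite Hi. apply coord_between. split.
    + transitivity (wsum (step3 y (IZR k) (IZR k) (IZR k - 1)));
        [rewrite wsum_step3, Hsplit; right; ring|].
      apply wsum_le; auto using bounded_step3. intro z. apply Hbounds.
    + transitivity (wsum (step3 y (IZR k + 1) (IZR k) (IZR k)));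
        [|rewrite wsum_step3, Hsplit; right; ring].
      apply wsum_le; auto using bounded_step3. intro z. apply Hbounds.
  - assert (Hsum : wsum c = wsum (step3 y (IZR k + 1) (c y) (IZR k))).
    { apply wsum_ext. intro z. destruct (olt_total z y) as [h|[->|h]].
      - rewrite step3_lt by auto. now apply (coherent_before c y z Hc h).
      - now rewrite step3_eq.
      - rewrite step3_gt by auto. now apply (coherent_after c y z Hc h). }
    rewrite Hsum, wsum_step3.
    replace ((IZR k + 1) * mass_below y + c y * atom y + IZR k * mass_above y)
      with (IZR k * total_mass + mass_below y + (c y - IZR k) * atom y) by (rewrite Hsplit; ring).
    rewrite coord_at; [ring | lra].
Qed.

Section Gap.

Variable t : R.
Hypothesis t_period : 0 <= t < total_mass.
Hypothesis t_gap : forall f, ~ (mass_below f < t < mass_below f + atom f).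

Let left_of_t (y : Y) := mass_below y + atom y <= t.

Lemma mass_left_of_gap_le : mass left_of_t <= t.
Proof.
  apply wsum_le_of_partial; [apply bounded_indic|]. intro N.
  destruct (finite_max Y left_of_t (S N)) as [Hnone|[ys [Hys [_ Hmax]]]].
  - transitivity (sum_f_R0 (fun _ => 0) N); [|rewrite sum_cte; lra].
    apply sum_Rle. intros n Hn. unfold wterm. destruct (decode n) as [y|] eqn:E; [|lra].
    apply decode_some in E. rewrite indic_false; [lra|]. intro. apply (Hnone y); auto. lia.
  - transitivity (sum_f_R0 (wterm (indic (fun z => z ≺ ys \/ z = ys))) N).
    + apply sum_Rle. intros n Hn. unfold wterm. destruct (decode n) as [y|] eqn:E; [|lra].
      apply decode_some in E. pose proof (weight_pos n).
      pose proof (indic_range (fun z => z ≺ ys \/ z = ys) y).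
      destruct (classic (left_of_t y)) as [Hd|Hd].
      * rewrite (indic_true left_of_t), indic_true; [lra | | auto].
        destruct (Hmax y Hd) as [->|h]; auto. lia.
      * rewrite indic_false by auto. nra.
    + eapply Rle_trans; [apply wsum_partial_le; [apply bounded_indic | intro; apply indic_range]|].
      fold (mass (fun z => z ≺ ys \/ z = ys)). rewrite mass_below_le. apply Hys.
Qed.

Lemma mass_left_of_gap : mass left_of_t = t.
Proof.
  destruct (Rle_lt_or_eq_dec _ _ mass_left_of_gap_le) as [Hlt|]; auto. exfalso.
  destruct (pow_half_lt (t - mass left_of_t)) as [N HN]; [lra|].
  destruct (finite_min Y (fun y => ~ left_of_t y) N) as [Hnone|[f [Hf [_ Hmin]]]].
  - assert (mass (fun y => ~ left_of_t y) <= (/2) ^ N).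
    { eapply Rle_trans; [|apply mass_code_tail]. apply mass_mono. intros y Hy.
      destruct (le_lt_dec N (code y)); auto. exfalso; apply (Hnone y); auto. }
    pose proof (mass_split (fun _ => True) left_of_t) as Hs. rewrite mass_full in Hs.
    rewrite (mass_ext (fun y => True /\ left_of_t y) left_of_t),
      (mass_ext (fun y => True /\ ~ left_of_t y) (fun y => ~ left_of_t y)) in Hs by tauto.
    lra.
  - assert (mass_below f <= mass left_of_t + (/2) ^ N).
    { eapply Rle_trans; [|apply Rplus_le_compat_l, mass_code_tail].
      apply mass_union_le. intros y Hy. destruct (classic (left_of_t y)) as [Hd|Hd]; auto. right.
      destruct (le_lt_dec N (code y)) as [|Hyc]; auto. exfalso.
      destruct (Hmin y Hd Hyc) as [->|h]; eapply olt_irrefl; eauto using olt_trans. }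
    apply (t_gap f). unfold left_of_t in Hf. lra.
Qed.

End Gap.

Lemma wsum_coord_base t : 0 <= t < total_mass -> wsum (fun y => coord y t) = t.
Proof.
  intro Ht.
  destruct (classic (exists f, mass_below f < t < mass_below f + atom f)) as [[f Hf]|Hgap].
  - pose proof (atom_pos f). set (th := (t - mass_below f) / atom f).
    rewrite (wsum_ext _ (step3 f 1 th 0)).
    + rewrite wsum_step3. unfold th. field. lra.
    + intro z. rewrite coord_base by auto. destruct (olt_total z f) as [h|[->|h]].
      * rewrite step3_lt by auto. pose proof (mass_below_lt z f h). pose proof (atom_pos z).
        destruct Rle_dec; [|lra]. apply Rmin_left, div_ge_1; lra.
      * rewrite step3_eq. destruct Rle_dec; [|lra]. apply Rmin_right.
        unfold th. apply (Rmult_le_reg_r (atom f)); auto. unfold Rdiv.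
        rewrite Rmult_assoc, Rinv_l, Rmult_1_r; lra.
      * rewrite step3_gt by auto. pose proof (mass_below_lt f z h). destruct Rle_dec; lra.
  - assert (Hgap' : forall f, ~ (mass_below f < t < mass_below f + atom f)) by firstorder.
    etransitivity; [|exact (mass_left_of_gap t Ht Hgap')].
    apply wsum_ext. intro y. rewrite coord_base by auto. pose proof (atom_pos y).
    destruct (classic (mass_below y + atom y <= t)) as [Hd|Hd].
    + rewrite indic_true by auto. destruct Rle_dec; [|lra]. apply Rmin_left, div_ge_1; lra.
    + rewrite indic_false by auto.
      assert (t <= mass_below y)
        by (destruct (Rle_dec t (mass_below y)); auto; exfalso; apply Hgap; exists y; lra).
      destruct Rle_dec; auto. replace (t - mass_below y) with 0 by lra.
      unfold Rdiv. rewrite Rmult_0_l. apply Rmin_right; lra.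
Qed.

Lemma wsum_coord t : wsum (fun y => coord y t) = t.
Proof.
  pose proof total_mass_pos. set (k := Int_part (t / total_mass)).
  destruct (Int_part_bounds (t / total_mass)) as [H1 H2]. fold k in H1, H2.
  set (t0 := t - IZR k * total_mass).
  assert (Ht0 : 0 <= t0 < total_mass).
  { unfold t0. split.
    - apply (Rmult_le_compat_r total_mass) in H1; [|lra]. field_simplify in H1; lra.
    - apply (Rmult_lt_compat_r total_mass) in H2; [|lra]. field_simplify in H2; lra. }
  rewrite (wsum_ext _ (fun y => IZR k + coord y t0)).
  - rewrite wsum_shift, wsum_coord_base by (auto using coherent_bounded, coord_coherent).
    unfold t0. ring.
  - intro y. replace t with (t0 + IZR k * total_mass) at 1 by (unfold t0; ring). apply coord_shift.
Qed.

(** * Automorphisms of [Z ×lex Y] and their realization *)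

Definition lexlt (k1 : Z) (y1 : Y) (k2 : Z) (y2 : Y) := (k1 < k2)%Z \/ (k1 = k2 /\ y1 ≺ y2).

Lemma lexlt_irrefl k y : ~ lexlt k y k y.
Proof. intros [h|[_ h]]; [lia | eapply olt_irrefl; eauto]. Qed.

Lemma lexlt_asym k1 y1 k2 y2 : lexlt k1 y1 k2 y2 -> lexlt k2 y2 k1 y1 -> False.
Proof. intros [h|[e h]] [h'|[e' h']]; try lia. eapply olt_irrefl; eauto using olt_trans. Qed.

Lemma lexlt_total k1 y1 k2 y2 : lexlt k1 y1 k2 y2 \/ (k1 = k2 /\ y1 = y2) \/ lexlt k2 y2 k1 y1.
Proof.
  unfold lexlt. destruct (Z.lt_trichotomy k1 k2) as [h|[<-|h]]; auto.
  destruct (olt_total y1 y2) as [h|[h|h]]; auto.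
Qed.

(* An order automorphism of [Z ×lex Y] commuting with [(k, y) ↦ (k + 1, y)]: it sends
   [(k, y)] to [(k + ldeg y, lmap y)].  When [Y] carries a cyclic order, these are the
   lifts of its cyclic-order automorphisms, and they realize as lifts of circle maps. *)
Record lex_aut := {
  ldeg : Y -> Z;
  lmap : Y -> Y;
  linv : Y -> Y;
  lmap_linv : forall y, lmap (linv y) = y;
  linv_lmap : forall y, linv (lmap y) = y;
  lmap_lex : forall k1 y1 k2 y2, lexlt k1 y1 k2 y2 ->
    lexlt (k1 + ldeg y1) (lmap y1) (k2 + ldeg y2) (lmap y2) }.

Lemma lmap_lex_reflect (s : lex_aut) k1 y1 k2 y2 :
  lexlt (k1 + ldeg s y1) (lmap s y1) (k2 + ldeg s y2) (lmap s y2) -> lexlt k1 y1 k2 y2.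
Proof.
  intro H. destruct (lexlt_total k1 y1 k2 y2) as [h|[[-> ->]|h]]; auto; exfalso.
  - eapply lexlt_irrefl; eauto.
  - apply (lmap_lex s) in h. eapply lexlt_asym; eauto.
Qed.

Program Definition lex_id : lex_aut :=
  {| ldeg := fun _ => 0%Z; lmap := fun y => y; linv := fun y => y |}.
Next Obligation. now rewrite !Z.add_0_r. Qed.

Program Definition lex_comp (s u : lex_aut) : lex_aut :=
  {| ldeg := fun y => (ldeg u y + ldeg s (lmap u y))%Z;
     lmap := fun y => lmap s (lmap u y); linv := fun y => linv u (linv s y) |}.
Next Obligation. now rewrite !lmap_linv. Qed.
Next Obligation. now rewrite !linv_lmap. Qed.
Next Obligation. rewrite !Z.add_assoc. now apply (lmap_lex s), (lmap_lex u). Qed.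

Program Definition lex_inv (s : lex_aut) : lex_aut :=
  {| ldeg := fun y => (- ldeg s (linv s y))%Z; lmap := linv s; linv := lmap s |}.
Next Obligation. apply linv_lmap. Qed.
Next Obligation. apply lmap_linv. Qed.
Next Obligation.
  apply (lmap_lex_reflect s). rewrite !lmap_linv.
  replace (k1 + - ldeg s (linv s y1) + ldeg s (linv s y1))%Z with k1 by lia.
  replace (k2 + - ldeg s (linv s y2) + ldeg s (linv s y2))%Z with k2 by lia. auto.
Qed.

Program Definition lex_shift (e : Z) : lex_aut :=
  {| ldeg := fun _ => e; lmap := fun y => y; linv := fun y => y |}.
Next Obligation. destruct H as [h|[h1 h2]]; [left; lia | right; split; auto; lia]. Qed.

Definition lex_eq (s u : lex_aut) := forall y, lmap s y = lmap u y /\ ldeg s y = ldeg u y.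

Lemma lex_eq_refl s : lex_eq s s.
Proof. intro; auto. Qed.

Lemma lex_eq_sym s u : lex_eq s u -> lex_eq u s.
Proof. intros H y; destruct (H y); auto. Qed.

Lemma lex_eq_trans s u v : lex_eq s u -> lex_eq u v -> lex_eq s v.
Proof. intros H1 H2 y; destruct (H1 y), (H2 y); split; congruence. Qed.

Lemma lex_eq_comp s s' u u' : lex_eq s s' -> lex_eq u u' -> lex_eq (lex_comp s u) (lex_comp s' u').
Proof.
  intros H1 H2 y. simpl. destruct (H2 y) as [-> ->]. destruct (H1 (lmap u' y)) as [-> ->]. auto.
Qed.

Lemma lex_comp_assoc s u v : lex_eq (lex_comp s (lex_comp u v)) (lex_comp (lex_comp s u) v).
Proof. intro y. simpl. split; auto. lia. Qed.

Lemma lex_comp_id_l s : lex_eq (lex_comp lex_id s) s.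
Proof. intro y. simpl. split; auto. lia. Qed.

Lemma lex_comp_id_r s : lex_eq (lex_comp s lex_id) s.
Proof. intro y. simpl. auto. Qed.

Lemma lex_comp_inv_r s : lex_eq (lex_comp s (lex_inv s)) lex_id.
Proof. intro y. simpl. rewrite lmap_linv. split; auto. lia. Qed.

Lemma lex_comp_inv_l s : lex_eq (lex_comp (lex_inv s) s) lex_id.
Proof. intro y. simpl. rewrite linv_lmap. split; auto. lia. Qed.

Lemma linv_ext (s u : lex_aut) : (forall y, lmap s y = lmap u y) -> forall y, linv s y = linv u y.
Proof. intros H y. rewrite <- (lmap_linv u y) at 1. rewrite <- H. apply linv_lmap. Qed.

Lemma ldeg_const_diff (s u : lex_aut) : (forall y, lmap s y = lmap u y) ->
  exists e, forall y, ldeg s y = (ldeg u y + e)%Z.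
Proof.
  intro H. exists (ldeg s (some_elt Y) - ldeg u (some_elt Y))%Z.
  assert (Hstep : forall (v : lex_aut) y y', y ≺ y' ->
    (ldeg v y = ldeg v y' /\ lmap v y ≺ lmap v y') \/
    (ldeg v y' = ldeg v y + 1 /\ lmap v y' ≺ lmap v y)%Z).
  { intros v y y' h. pose proof (lmap_lex v 0 y 0 y' (or_intror (conj eq_refl h))) as A1.
    pose proof (lmap_lex v 0 y' 1 y ltac:(left; lia)) as A2.
    destruct A1 as [A1|[A1 A1']], A2 as [A2|[A2 A2']]; try lia; [right | left]; split; auto; lia. }
  assert (K : forall y y', y ≺ y' -> (ldeg s y' - ldeg s y = ldeg u y' - ldeg u y)%Z).
  { intros y y' h.
    destruct (Hstep s y y' h) as [[g1 g2]|[g1 g2]], (Hstep u y y' h) as [[h1 h2]|[h1 h2]];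
      rewrite ?H in g2; try lia; exfalso; eapply olt_irrefl; eauto using olt_trans. }
  intro y.
  destruct (olt_total y (some_elt Y)) as [h|[->|h]];
    [specialize (K _ _ h) | | specialize (K _ _ h)]; lia.
Qed.

Lemma coherent_transport (s : lex_aut) c :
  coherent c -> coherent (fun y => IZR (ldeg s (linv s y)) + c (linv s y)).
Proof.
  intros Hc y1' y2' H12.
  set (y1 := linv s y1') in *. set (y2 := linv s y2') in *.
  set (d1 := ldeg s y1). set (d2 := ldeg s y2).
  assert (A : lexlt (- d1) y1 (- d2) y2).
  { apply (lmap_lex_reflect s). replace (- d1 + ldeg s y1)%Z with 0%Z by (unfold d1; lia).
    replace (- d2 + ldeg s y2)%Z with 0%Z by (unfold d2; lia). unfold y1, y2. rewrite !lmap_linv.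
    now right. }
  assert (B : lexlt (- d2) y2 (1 - d1) y1).
  { apply (lmap_lex_reflect s). replace (- d2 + ldeg s y2)%Z with 0%Z by (unfold d2; lia).
    replace (1 - d1 + ldeg s y1)%Z with 1%Z by (unfold d1; lia). left; lia. }
  destruct A as [A|[Ae A]], B as [B|[Be B]]; try lia.
  - assert (d2 = d1 - 1)%Z as -> by lia.
    destruct (Hc _ _ B) as [n [H1 [H2 [H3 [E|E]]]]].
    + exists (d1 + n)%Z. rewrite plus_IZR, minus_IZR. repeat split; lra.
    + exists (d1 + n - 1)%Z. rewrite minus_IZR, plus_IZR, minus_IZR. repeat split; lra.
  - assert (d1 = d2) as -> by lia.
    destruct (Hc _ _ A) as [n [H1 [H2 [H3 [E|E]]]]];
      exists (d2 + n)%Z; rewrite plus_IZR; repeat split; lra.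
Qed.

Definition realize (s : lex_aut) (t : R) : R :=
  wsum (fun y => IZR (ldeg s (linv s y)) + coord (linv s y) t).

Lemma bounded_realize_summand (s : lex_aut) t :
  bounded (fun y => IZR (ldeg s (linv s y)) + coord (linv s y) t).
Proof. apply coherent_bounded, (coherent_transport s (fun y => coord y t)), coord_coherent. Qed.

Lemma coord_realize (s : lex_aut) t y :
  coord y (realize s t) = IZR (ldeg s (linv s y)) + coord (linv s y) t.
Proof.
  unfold realize. rewrite coord_wsum; auto.
  apply (coherent_transport s (fun y => coord y t)), coord_coherent.
Qed.

Lemma realize_ext (s u : lex_aut) :
  (forall y, linv s y = linv u y /\ ldeg s (linv s y) = ldeg u (linv u y)) ->
  forall t, realize s t = realize u t.
Proof. intros H t. apply wsum_ext. intro y. destruct (H y) as [-> ->]. auto. Qed.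

Lemma realize_lex_eq s u : lex_eq s u -> forall t, realize s t = realize u t.
Proof.
  intro H. apply realize_ext. intro y.
  assert (Hmap : forall y, lmap s y = lmap u y) by (intro; apply H).
  rewrite (linv_ext s u Hmap y). split; auto. apply H.
Qed.

Lemma realize_id t : realize lex_id t = t.
Proof.
  transitivity (wsum (fun y => coord y t)); [|apply wsum_coord]. apply wsum_ext. intro; simpl; ring.
Qed.

Lemma realize_comp (s u : lex_aut) t : realize (lex_comp s u) t = realize s (realize u t).
Proof.
  unfold realize at 1 2. apply wsum_ext. intro y. simpl.
  rewrite coord_realize, lmap_linv, plus_IZR. ring.
Qed.

Lemma realize_inv (s : lex_aut) t : realize s (realize (lex_inv s) t) = t.
Proof.
  rewrite <- realize_comp. transitivity (realize lex_id t); [|apply realize_id].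
  apply realize_lex_eq, lex_comp_inv_r.
Qed.

Lemma realize_lex_shift e t : realize (lex_shift e) t = t + IZR e * total_mass.
Proof.
  unfold realize. simpl. rewrite wsum_shift, wsum_coord; [ring|].
  apply coherent_bounded, coord_coherent.
Qed.

Lemma realize_shift (s : lex_aut) t k :
  realize s (t + IZR k * total_mass) = realize s t + IZR k * total_mass.
Proof.
  unfold realize.
  rewrite (wsum_ext _ (fun y => IZR k + (IZR (ldeg s (linv s y)) + coord (linv s y) t))).
  - rewrite wsum_shift by apply bounded_realize_summand. ring.
  - intro y. rewrite coord_shift. ring.
Qed.

Lemma coord_strict t1 t2 : t1 < t2 -> exists y, coord y t1 < coord y t2.
Proof.
  intro H. apply NNPP. intro Hn.
  assert (Heq : forall y, coord y t1 = coord y t2).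
  { intro y. destruct (coord_mono y t1 t2 ltac:(lra)); auto. exfalso; apply Hn; eauto. }
  rewrite <- (wsum_coord t1), <- (wsum_coord t2), (wsum_ext _ _ Heq) in H. lra.
Qed.

Lemma realize_incr (s : lex_aut) t1 t2 : t1 < t2 -> realize s t1 < realize s t2.
Proof.
  intro H. destruct (coord_strict t1 t2 H) as [y Hy]. unfold realize.
  cut (0 < wsum (fun z => (IZR (ldeg s (linv s z)) + coord (linv s z) t2)
                         - (IZR (ldeg s (linv s z)) + coord (linv s z) t1))).
  { rewrite wsum_minus by apply bounded_realize_summand. lra. }
  apply (wsum_pos _ (lmap s y)).
  - apply bounded_plus, bounded_opp; apply bounded_realize_summand.
  - intro z. pose proof (coord_mono (linv s z) t1 t2). lra.
  - rewrite linv_lmap. lra.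
Qed.

Lemma realize_same_map (s u : lex_aut) : (forall y, lmap s y = lmap u y) ->
  exists e : Z, forall t, realize s t = realize u t + IZR e * total_mass.
Proof.
  intro H. destruct (ldeg_const_diff s u H) as [e He]. exists e. intro t.
  rewrite <- realize_lex_shift, <- realize_comp. apply realize_ext. intro y. simpl.
  pose proof (linv_ext s u H y) as E. split; auto. rewrite E, He. lia.
Qed.

Lemma IZR_half_neq (a b : Z) : IZR a + /2 <> IZR b + 1.
Proof.
  intro H.
  assert (E : IZR (2 * a + 1) = IZR (2 * b + 2)) by (rewrite !plus_IZR, !mult_IZR; simpl; lra).
  apply eq_IZR in E. lia.
Qed.

(* The midpoint of the arc of [y] has coordinate [1/2] at [y] only, so it detects
   [(ldeg, lmap)]. *)
Lemma realize_faithful (s u : lex_aut) : (forall t, realize s t = realize u t) -> lex_eq s u.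
Proof.
  intros H y. pose proof (atom_pos y). pose proof (mass_below_atom_le y).
  pose proof (mass_nonneg (fun z => z ≺ y)). fold (mass_below y) in *.
  set (t := mass_below y + atom y / 2).
  assert (Hc : coord y t = /2).
  { rewrite coord_base by (unfold t; lra). destruct Rle_dec; [|unfold t in *; lra].
    unfold t.
    replace ((mass_below y + atom y / 2 - mass_below y) / atom y) with (/2) by (field; lra).
    apply Rmin_right; lra. }
  pose proof (coord_realize s t (lmap s y)) as E1. rewrite linv_lmap, Hc in E1.
  pose proof (coord_realize u t (lmap u y)) as E2. rewrite linv_lmap, Hc, <- (H t) in E2.
  set (v := realize s t) in *.
  assert (Heq : lmap s y = lmap u y).
  { destruct (olt_total (lmap s y) (lmap u y)) as [h|[h|h]]; auto; exfalso;
      destruct (coord_coherent v _ _ h) as [n [_ [_ [_ [E|E]]]]].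
    - rewrite E1 in E. eapply IZR_half_neq; eauto.
    - rewrite E2 in E. apply (IZR_half_neq (ldeg u y) (n - 1)). rewrite minus_IZR. lra.
    - rewrite E2 in E. eapply IZR_half_neq; eauto.
    - rewrite E1 in E. apply (IZR_half_neq (ldeg s y) (n - 1)). rewrite minus_IZR. lra. }
  split; auto. rewrite Heq in E1. rewrite E1 in E2. apply eq_IZR. lra.
Qed.

End Realization.

Arguments lmap {Y} _ _.
Arguments linv {Y} _ _.
Arguments ldeg {Y} _ _.

(** * The cyclic order of primitive directions *)

Open Scope Z_scope.

Definition det2 (p q : Z*Z) : Z := fst p * snd q - snd p * fst q.
Definition primitive (p : Z*Z) : Prop := exists x y, x * fst p + y * snd p = 1.

Lemma det2_anti p q : det2 p q = - det2 q p.
Proof. unfold det2; ring. Qed.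

Lemma det2_actV A p q : inSL2Z A -> det2 (actV A p) (actV A q) = det2 p q.
Proof.
  unfold inSL2Z, M2det, det2, actV.
  destruct A as [a b c d]; destruct p as [p1 p2], q as [q1 q2]; simpl.
  intro H. transitivity ((a * d - b * c) * (p1 * q2 - p2 * q1)). ring. rewrite H. ring.
Qed.

Lemma actV_inv_l A p : inSL2Z A -> actV (M2inv A) (actV A p) = p.
Proof.
  unfold inSL2Z, M2det, actV, M2inv. destruct A as [a b c d]; destruct p as [p1 p2]; simpl. intro H.
  f_equal.
  - transitivity ((a * d - b * c) * p1). ring. rewrite H; ring.
  - transitivity ((a * d - b * c) * p2). ring. rewrite H; ring.
Qed.

Lemma actV_inv_r A p : inSL2Z A -> actV A (actV (M2inv A) p) = p.
Proof.
  unfold inSL2Z, M2det, actV, M2inv. destruct A as [a b c d]; destruct p as [p1 p2]; simpl. intro H.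
  f_equal.
  - transitivity ((a * d - b * c) * p1). ring. rewrite H; ring.
  - transitivity ((a * d - b * c) * p2). ring. rewrite H; ring.
Qed.

Lemma inSL2Z_inv A : inSL2Z A -> inSL2Z (M2inv A).
Proof. unfold inSL2Z, M2det, M2inv. destruct A; simpl. intro H. rewrite <- H. ring. Qed.

Lemma actV_inj A p q : inSL2Z A -> actV A p = actV A q -> p = q.
Proof. intros H E. rewrite <- (actV_inv_l A p H), <- (actV_inv_l A q H), E. auto. Qed.

Lemma primitive_actV A p : inSL2Z A -> primitive p -> primitive (actV A p).
Proof.
  intros H [x [y Hp]]. unfold inSL2Z, M2det in H. destruct A as [a b c d]; destruct p as [p1 p2].
  simpl in *.
  exists (x * d - y * c), (- x * b + y * a). unfold actV; simpl.
  transitivity ((a * d - b * c) * (x * p1 + y * p2)). ring. rewrite H, Hp. ring.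
Qed.

Definition e1 : Z*Z := (1, 0).
Lemma primitive_e1 : primitive e1.
Proof. exists 1, 0. simpl. ring. Qed.

Lemma inSL2Z_mul A B : inSL2Z A -> inSL2Z B -> inSL2Z (M2mul A B).
Proof.
  unfold inSL2Z, M2det, M2mul. destruct A as [a b c d], B as [e f g h]; simpl. intros H1 H2.
  transitivity ((a * d - b * c) * (e * h - f * g)); [ring | now rewrite H1, H2].
Qed.

Lemma actV_mul A B p : actV (M2mul A B) p = actV A (actV B p).
Proof. destruct A, B, p; unfold actV, M2mul; simpl; f_equal; ring. Qed.

Lemma det2_Vadd p v w : det2 p (Vadd v w) = det2 p v + det2 p w.
Proof. unfold det2, Vadd; simpl; ring. Qed.

Lemma M2mul_assoc A B C : M2mul A (M2mul B C) = M2mul (M2mul A B) C.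
Proof. destruct A, B, C; unfold M2mul; cbn -[Z.mul Z.add]; f_equal; ring. Qed.

Lemma M2mul_1l A : M2mul M2one A = A.
Proof. destruct A; unfold M2mul, M2one; cbn -[Z.mul Z.add]; f_equal; ring. Qed.

Lemma M2mul_1r A : M2mul A M2one = A.
Proof. destruct A; unfold M2mul, M2one; cbn -[Z.mul Z.add]; f_equal; ring. Qed.

Lemma M2inv_l A : inSL2Z A -> M2mul (M2inv A) A = M2one.
Proof.
  destruct A; unfold inSL2Z, M2det, M2mul, M2inv, M2one; cbn -[Z.mul Z.add Z.sub Z.opp]. intro.
  f_equal; lia.
Qed.

Lemma M2inv_r A : inSL2Z A -> M2mul A (M2inv A) = M2one.
Proof.
  destruct A; unfold inSL2Z, M2det, M2mul, M2inv, M2one; cbn -[Z.mul Z.add Z.sub Z.opp]. intro.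
  f_equal; lia.
Qed.

Definition e2 : Z*Z := (0, 1).

Lemma primitive_e2 : primitive e2.
Proof. exists 0, 1. simpl. ring. Qed.

Lemma M2_eq_of_actV A B : actV A e1 = actV B e1 -> actV A e2 = actV B e2 -> A = B.
Proof. destruct A, B; unfold actV, e1, e2; simpl. intros [= H1 H2] [= H3 H4]. f_equal; lia. Qed.

Lemma affine_eq_of_actV A v B w : inSL2Z A ->
  (forall p, primitive p -> actV A p = actV B p /\ det2 (actV A p) v = det2 (actV B p) w) ->
  (A, v) = (B, w).
Proof.
  intros HA H.
  assert (AB : A = B) by (apply M2_eq_of_actV; apply H; [apply primitive_e1 | apply primitive_e2]).
  subst B.
  f_equal.
  destruct (H (actV (M2inv A) e1) (primitive_actV _ _ (inSL2Z_inv A HA) primitive_e1)) as [_ D1].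
  destruct (H (actV (M2inv A) e2) (primitive_actV _ _ (inSL2Z_inv A HA) primitive_e2)) as [_ D2].
  rewrite actV_inv_r in D1, D2 by auto. destruct v, w. unfold det2, e1, e2 in *; cbn [fst snd] in *.
  f_equal; lia.
Qed.

(* A nonzero vector [p] is encoded by the key ([upper p], [upper_rep p]): its half-plane and
   its representative in the upper half-plane, on which [det2 > 0] is a strict total order.
   [det2 p q > 0], [p = q] and [angle_ltb p q] become [key_det_lt], [key_eq] and [key_lt] on
   keys, and changing the base point of the cyclic order is a finite case analysis. *)
Definition key_det_lt {T} (lt : T -> T -> Prop) (h1 : bool) (r1 : T) (h2 : bool) (r2 : T) : Prop :=
  if Bool.eqb h1 h2 then lt r1 r2 else lt r2 r1.
Definition key_eq {T} (h1 : bool) (r1 : T) (h2 : bool) (r2 : T) : Prop :=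
  if Bool.eqb h1 h2 then r1 = r2 else False.
Definition key_lt {T} (lt : T -> T -> Prop) (h1 : bool) (r1 : T) (h2 : bool) (r2 : T) : Prop :=
  if h1 then (if h2 then lt r1 r2 else True) else (if h2 then False else lt r1 r2).

Lemma key_rebase {T} (lt : T -> T -> Prop) (hu hx hy : bool) (ru rx ry : T)
  (irr : forall a, lt a a -> False)
  (asym : forall a b, lt a b -> lt b a -> False)
  (tr_uxy : lt ru rx -> lt rx ry -> lt ru ry)
  (tr_uyx : lt ru ry -> lt ry rx -> lt ru rx)
  (tr_xuy : lt rx ru -> lt ru ry -> lt rx ry)
  (tr_xyu : lt rx ry -> lt ry ru -> lt rx ru)
  (tr_yux : lt ry ru -> lt ru rx -> lt ry rx)
  (tr_yxu : lt ry rx -> lt rx ru -> lt ry ru)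
  (t1 : lt ru rx \/ ru = rx \/ lt rx ru)
  (t2 : lt rx ry \/ rx = ry \/ lt ry rx)
  (t3 : lt ru ry \/ ru = ry \/ lt ry ru) :
  ~ key_eq hx rx hy ry ->
  ((key_det_lt lt hu ru hx rx \/ key_eq hx rx hu ru) /\
   ~ (key_det_lt lt hu ru hy ry \/ key_eq hy ry hu ru)) \/
  (((key_det_lt lt hu ru hx rx \/ key_eq hx rx hu ru) <->
    (key_det_lt lt hu ru hy ry \/ key_eq hy ry hu ru)) /\ key_det_lt lt hx rx hy ry) ->
  ((key_eq hu ru hx rx \/ key_lt lt hu ru hx rx) /\ key_lt lt hx rx hy ry) \/
  (key_lt lt hx rx hy ry /\ key_lt lt hy ry hu ru) \/
  (key_lt lt hy ry hu ru /\ (key_eq hu ru hx rx \/ key_lt lt hu ru hx rx)).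
Proof.
  unfold key_det_lt, key_eq, key_lt.
  destruct hu, hx, hy; simpl;
  destruct t1 as [h1|[h1|h1]]; destruct t2 as [h2|[h2|h2]]; destruct t3 as [h3|[h3|h3]];
  try (subst; solve [exfalso; eauto]);
  repeat match goal with
  | H : ?a = ?b |- _ => subst a
  | H : ?a = ?b |- _ => subst b
  end;
  try (solve [exfalso; eauto]);
  repeat match goal with
  | H : lt ?a ?b |- _ => assert (~ lt b a) by (intro; eapply asym; eauto);
      assert (a <> b) by (intro; subst; eapply irr; eauto);
      assert (b <> a) by (intro; subst; eapply irr; eauto); revert H
  end; intros;
  try (assert (~ lt ru ru) by (intro; eapply irr; eauto));
  try (assert (~ lt rx rx) by (intro; eapply irr; eauto));
  try (assert (~ lt ry ry) by (intro; eapply irr; eauto));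
  tauto.
Qed.

Definition upper (p : Z*Z) : bool := (0 <? snd p) || ((snd p =? 0) && (0 <? fst p)).
Definition vneg (p : Z*Z) : Z*Z := (- fst p, - snd p).
Definition upper_rep (p : Z*Z) : Z*Z := if upper p then p else vneg p.

(* The counterclockwise order of directions, starting from [e1]. *)
Definition angle_ltb (p q : Z*Z) : bool :=
  (upper p && negb (upper q)) || (Bool.eqb (upper p) (upper q) && (0 <? det2 p q)).
Definition angle_lt (p q : Z*Z) : Prop := angle_ltb p q = true.

Lemma primitive_nonzero p : primitive p -> p <> (0,0).
Proof. intros [x [y H]] E. subst. simpl in H. lia. Qed.

Lemma upper_vneg p : p <> (0,0) -> upper (vneg p) = negb (upper p).
Proof.
  destruct p as [a b]. intro H. unfold upper, vneg; simpl.
  destruct (Z.ltb_spec 0 b), (Z.ltb_spec 0 (-b)), (Z.eqb_spec b 0), (Z.eqb_spec (-b) 0),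
           (Z.ltb_spec 0 a), (Z.ltb_spec 0 (-a)); simpl; auto; try lia.
  exfalso; apply H; f_equal; lia.
Qed.

Lemma upper_rep_upper p : p <> (0,0) -> upper (upper_rep p) = true.
Proof.
  intro H. unfold upper_rep. destruct (upper p) eqn:E; auto. rewrite upper_vneg; auto.
  rewrite E; auto.
Qed.

Lemma primitive_vneg p : primitive p -> primitive (vneg p).
Proof. intros [x [y H]]. exists (-x), (-y). simpl. lia. Qed.

Lemma primitive_upper_rep p : primitive p -> primitive (upper_rep p).
Proof. intro H. unfold upper_rep. destruct upper; auto. apply primitive_vneg; auto. Qed.

Definition half_sign (p : Z*Z) : Z := if upper p then 1 else -1.

Lemma det2_upper_rep p q : det2 p q = half_sign p * half_sign q * det2 (upper_rep p) (upper_rep q).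
Proof.
  unfold half_sign, upper_rep, det2, vneg. destruct (upper p), (upper q); cbn [fst snd]; ring.
Qed.

Lemma primitive_parallel p q : primitive p -> primitive q -> det2 p q = 0 -> q = p \/ q = vneg p.
Proof.
  destruct p as [p1 p2], q as [q1 q2]. intros [x [y Hp]] [x' [y' Hq]] Hd.
  unfold det2 in Hd; simpl in *.
  set (l := x * q1 + y * q2). set (m := x' * p1 + y' * p2).
  assert (E1 : q1 = l * p1).
  { assert (l * p1 = q1 * (x * p1 + y * p2) + y * (p1 * q2 - p2 * q1)) by (unfold l; ring).
    rewrite Hp, Hd in H. lia. }
  assert (E2 : q2 = l * p2).
  { assert (l * p2 = q2 * (x * p1 + y * p2) - x * (p1 * q2 - p2 * q1)) by (unfold l; ring).
    rewrite Hp, Hd in H. lia. }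
  assert (F1 : p1 = m * q1).
  { assert (m * q1 = p1 * (x' * q1 + y' * q2) - y' * (p1 * q2 - p2 * q1)) by (unfold m; ring).
    rewrite Hq, Hd in H. lia. }
  assert (F2 : p2 = m * q2).
  { assert (m * q2 = p2 * (x' * q1 + y' * q2) + x' * (p1 * q2 - p2 * q1)) by (unfold m; ring).
    rewrite Hq, Hd in H. lia. }
  assert (Hml : m * l = 1).
  { clearbody l m. assert ((m * l - 1) * p1 = 0) by (rewrite E1 in F1; lia).
    assert ((m * l - 1) * p2 = 0) by (rewrite E2 in F2; lia).
    apply Z.mul_eq_0 in H, H0. destruct H, H0; try lia; subst; lia. }
  assert (l = 1 \/ l = -1) by (rewrite Z.mul_comm in Hml; apply Z.eq_mul_1 in Hml; lia).
  destruct H as [->| ->]. left. f_equal; lia. right. unfold vneg; simpl. f_equal; lia.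
Qed.

Lemma primitive_parallel_same_half p q :
  primitive p -> primitive q -> det2 p q = 0 -> upper p = upper q -> p = q.
Proof.
  intros Hp Hq Hd Hh. destruct (primitive_parallel p q Hp Hq Hd) as [->| E]; auto.
  subst q. rewrite upper_vneg in Hh by (apply primitive_nonzero; auto).
  destruct (upper p); discriminate.
Qed.

Lemma upper_spec p : upper p = true -> 0 <= snd p /\ (snd p = 0 -> 0 < fst p).
Proof.
  unfold upper.
  destruct (Z.ltb_spec 0 (snd p)), (Z.eqb_spec (snd p) 0), (Z.ltb_spec 0 (fst p)); simpl;
    intros; try discriminate; lia.
Qed.

Lemma upper_det_trans a b c : upper a = true -> upper b = true -> upper c = true ->
  0 < det2 a b -> 0 < det2 b c -> 0 < det2 a c.
Proof.
  destruct a as [a1 a2], b as [b1 b2], c as [c1 c2]. intros Ha Hb Hc H1 H2.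
  apply upper_spec in Ha, Hb, Hc. simpl in *. unfold det2 in *; simpl in *.
  assert ((a1 * c2 - a2 * c1) * b2 = (a1 * b2 - a2 * b1) * c2 + (b1 * c2 - b2 * c1) * a2) by ring.
  destruct (Z.eq_dec b2 0) as [Eb|Eb].
  - subst b2. specialize (proj2 Hb eq_refl). intro. nia.
  - assert (0 < b2) by lia.
    destruct (Z.eq_dec a2 0) as [Ea|Ea]; destruct (Z.eq_dec c2 0) as [Ec|Ec].
    + subst. specialize (proj2 Ha eq_refl). specialize (proj2 Hc eq_refl). intros. nia.
    + nia.
    + nia.
    + nia.
Qed.

Definition det_lt (a b : Z*Z) : Prop := 0 < det2 a b.

Lemma det2_pos_key p q : p <> (0,0) -> q <> (0,0) ->
  (0 < det2 p q <-> key_det_lt det_lt (upper p) (upper_rep p) (upper q) (upper_rep q)).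
Proof.
  intros. rewrite det2_upper_rep. unfold key_det_lt, det_lt, half_sign.
  rewrite (det2_anti (upper_rep q) (upper_rep p)).
  destruct (upper p), (upper q); cbn [Bool.eqb]; lia.
Qed.

Lemma vneg_inj p q : vneg p = vneg q -> p = q.
Proof. destruct p, q; unfold vneg; simpl; intro H; inversion H; f_equal; lia. Qed.

Lemma eq_key p q : (p = q <-> key_eq (upper p) (upper_rep p) (upper q) (upper_rep q)).
Proof.
  unfold key_eq, upper_rep. split.
  - intros ->. destruct (upper q); simpl; auto.
  - destruct (upper p) eqn:Ep, (upper q) eqn:Eq; simpl; try tauto. apply vneg_inj.
Qed.

Lemma angle_ltb_key p q : p <> (0,0) -> q <> (0,0) ->
  (angle_ltb p q = true <-> key_lt det_lt (upper p) (upper_rep p) (upper q) (upper_rep q)).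
Proof.
  intros. unfold angle_ltb, key_lt, det_lt. rewrite det2_upper_rep. unfold half_sign.
  destruct (upper p), (upper q); cbn [andb orb negb Bool.eqb]; rewrite ?Z.ltb_lt; try tauto;
  split; intro; try lia; try discriminate; auto.
Qed.

(* The counterclockwise order of directions, starting from [u]; it is [SL(2,Z)]-invariant. *)
Definition upper_from (u x : Z*Z) : Prop := 0 < det2 u x \/ x = u.
Definition angle_lt_from (u x y : Z*Z) : Prop :=
  (upper_from u x /\ ~ upper_from u y) \/ ((upper_from u x <-> upper_from u y) /\ 0 < det2 x y).

Definition cyclic3 (u x y : Z*Z) : Prop :=
  ((u = x \/ angle_lt u x) /\ angle_lt x y) \/ (angle_lt x y /\ angle_lt y u) \/
  (angle_lt y u /\ (u = x \/ angle_lt u x)).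

Lemma upper_rep_trichotomy a b : primitive a -> primitive b ->
  det_lt (upper_rep a) (upper_rep b) \/ upper_rep a = upper_rep b \/
  det_lt (upper_rep b) (upper_rep a).
Proof.
  intros Ha Hb. unfold det_lt.
  destruct (Z.lt_trichotomy 0 (det2 (upper_rep a) (upper_rep b))) as [h|[h|h]]; auto.
  - right; left. apply primitive_parallel_same_half; auto using primitive_upper_rep.
    rewrite !upper_rep_upper; auto using primitive_nonzero.
  - right; right. rewrite det2_anti. lia.
Qed.

Lemma upper_rep_det_trans a b c : primitive a -> primitive b -> primitive c ->
  det_lt (upper_rep a) (upper_rep b) -> det_lt (upper_rep b) (upper_rep c) ->
  det_lt (upper_rep a) (upper_rep c).
Proof.
  intros Ha Hb Hc. unfold det_lt.
  apply upper_det_trans; apply upper_rep_upper; now apply primitive_nonzero.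
Qed.

Lemma angle_lt_from_cyclic u x y : primitive u -> primitive x -> primitive y -> x <> y ->
  angle_lt_from u x y -> cyclic3 u x y.
Proof.
  intros Hu Hx Hy Hxy H.
  pose proof (primitive_nonzero _ Hu) as Nu. pose proof (primitive_nonzero _ Hx) as Nx.
  pose proof (primitive_nonzero _ Hy) as Ny.
  pose proof (key_rebase det_lt (upper u) (upper x) (upper y)) as R.
  unfold cyclic3, angle_lt. unfold angle_lt_from, upper_from in H.
  rewrite !angle_ltb_key by auto. rewrite !(eq_key u x).
  rewrite (det2_pos_key u x), (det2_pos_key u y), (det2_pos_key x y), (eq_key x u), (eq_key y u)
    in H by auto.
  apply R; eauto using upper_rep_det_trans, upper_rep_trichotomy.
  - intros a. unfold det_lt, det2. lia.
  - intros a b. unfold det_lt. rewrite (det2_anti b a). lia.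
  - now rewrite <- eq_key.
Qed.

Lemma upper_from_actV A u x : inSL2Z A -> (upper_from (actV A u) (actV A x) <-> upper_from u x).
Proof.
  intro H. unfold upper_from. rewrite det2_actV by auto. split; intros [h|h]; auto.
  right. eapply actV_inj; eauto. right. subst. auto.
Qed.

Lemma angle_lt_from_actV A u x y : inSL2Z A ->
  angle_lt_from u x y -> angle_lt_from (actV A u) (actV A x) (actV A y).
Proof.
  intros H. unfold angle_lt_from. rewrite !upper_from_actV by auto. rewrite det2_actV by auto. auto.
Qed.

Lemma upper_from_e1 x : primitive x -> (upper_from e1 x <-> upper x = true).
Proof.
  intros [a [b Hx]]. destruct x as [x1 x2]. unfold upper_from, upper, det2, e1; cbn [fst snd] in *.
  rewrite orb_true_iff, andb_true_iff, Z.ltb_lt, Z.eqb_eq, Z.ltb_lt. split.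
  - intros [h|h]. left; lia. inversion h; subst. right; split; lia.
  - intros [h|[h1 h2]]. left; lia. subst x2. right.
    assert (a * x1 = 1) by lia.
    apply Z.eq_mul_1 in H || (rewrite Z.mul_comm in H; apply Z.eq_mul_1 in H).
    f_equal. lia.
Qed.

Lemma angle_lt_from_e1 p q : primitive p -> primitive q -> angle_lt p q -> angle_lt_from e1 p q.
Proof.
  intros Hp Hq H. unfold angle_lt_from. rewrite !upper_from_e1 by auto.
  unfold angle_lt, angle_ltb in H.
  destruct (upper p) eqn:Ep, (upper q) eqn:Eq; simpl in H; try discriminate.
  all: first [ left; split; [reflexivity | discriminate]
             | right; split; [tauto | apply Z.ltb_lt; auto] ].
Qed.

Lemma angle_lt_irrefl p : ~ angle_lt p p.
Proof.
  unfold angle_lt, angle_ltb. replace (det2 p p) with 0 by (unfold det2; ring).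
  destruct (upper p); simpl; discriminate.
Qed.

Lemma angle_lt_trans a b c : primitive a -> primitive b -> primitive c ->
  angle_lt a b -> angle_lt b c -> angle_lt a c.
Proof.
  intros Ha Hb Hc. unfold angle_lt. rewrite !angle_ltb_key by (apply primitive_nonzero; auto).
  unfold key_lt.
  destruct (upper a), (upper b), (upper c); try tauto; eauto using upper_rep_det_trans.
Qed.

Lemma angle_lt_asym a b : primitive a -> primitive b -> angle_lt a b -> angle_lt b a -> False.
Proof. intros Ha Hb h1 h2. apply (angle_lt_irrefl a). eapply angle_lt_trans; eauto. Qed.

Lemma angle_lt_total a b : primitive a -> primitive b -> angle_lt a b \/ a = b \/ angle_lt b a.
Proof.
  intros Ha Hb. unfold angle_lt. rewrite !angle_ltb_key by (apply primitive_nonzero; auto).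
  rewrite (eq_key a b).
  unfold key_lt, key_eq. destruct (upper_rep_trichotomy a b Ha Hb) as [h|[h|h]];
  destruct (upper a), (upper b); simpl; auto.
Qed.

(* [wrap A p = 1] when [A] carries [p] past the base direction [e1], i.e. [A p] comes before
   [A e1]: the number of turns by which the lift of [A] shifts [p]. *)
Definition wrap (A : M2) (p : Z*Z) : Z := if angle_ltb (actV A p) (actV A e1) then 1 else 0.

Lemma wrap_lex A p q : inSL2Z A -> primitive p -> primitive q -> angle_lt p q ->
  wrap A p < wrap A q \/ (wrap A p = wrap A q /\ angle_lt (actV A p) (actV A q)).
Proof.
  intros HA Hp Hq H.
  pose proof (primitive_actV A e1 HA primitive_e1) as Pu.
  pose proof (primitive_actV A p HA Hp) as Px. pose proof (primitive_actV A q HA Hq) as Py.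
  assert (W : cyclic3 (actV A e1) (actV A p) (actV A q)).
  { apply angle_lt_from_cyclic; auto.
    - intro E. apply actV_inj in E as ->; auto. eapply angle_lt_irrefl; eauto.
    - apply angle_lt_from_actV, angle_lt_from_e1; auto. }
  unfold wrap. set (u := actV A e1) in *. set (x := actV A p) in *. set (y := actV A q) in *.
  unfold cyclic3 in W. pose proof (angle_lt_irrefl x) as Ix.
  pose proof (fun h => angle_lt_asym u x Pu Px h) as Aux. unfold angle_lt in *.
  destruct (angle_ltb x u) eqn:Ex, (angle_ltb y u) eqn:Ey; [right | exfalso | left; lia | right].
  - split; [reflexivity|].
    destruct W as [[_ W]|[[W _]|[_ [<-|E]]]]; [auto | auto | congruence | exfalso; auto].
  - destruct W as [[[<-|E] W]|[[W W']|[W [<-|E]]]]; congruence || auto.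
  - split; [reflexivity|]. destruct W as [[_ W]|[[W _]|[W _]]]; congruence || auto.
Qed.

(** * Lattice lines *)

(* [(p, c)] stands for the oriented lattice line [{x | det2 p x = c}] of primitive direction
   [p]; the affine map [x ↦ A x + v] sends it to [(A p, c + det2 (A p) v)]. *)
Definition blowup := {pc : (Z*Z) * Z | primitive (fst pc)}.
Definition bdir (y : blowup) : Z*Z := fst (proj1_sig y).
Definition blevel (y : blowup) : Z := snd (proj1_sig y).
Definition mkblowup (p : Z*Z) (c : Z) (H : primitive p) : blowup :=
  exist (fun pc => primitive (fst pc)) (p, c) H.

Lemma bdir_primitive y : primitive (bdir y).
Proof. now destruct y. Qed.

Lemma blowup_eq y1 y2 : bdir y1 = bdir y2 -> blevel y1 = blevel y2 -> y1 = y2.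
Proof.
  destruct y1 as [[p1 c1] H1], y2 as [[p2 c2] H2]. unfold bdir, blevel. simpl. intros -> ->.
  f_equal. apply proof_irrelevance.
Qed.

Definition Z_to_nat (z : Z) : nat := if 0 <=? z then Z.to_nat (2 * z) else Z.to_nat (-2 * z - 1).

Lemma Z_to_nat_inj a b : Z_to_nat a = Z_to_nat b -> a = b.
Proof. unfold Z_to_nat. destruct (Z.leb_spec 0 a), (Z.leb_spec 0 b); lia. Qed.

Lemma Cantor_to_nat_inj p q : Cantor.to_nat p = Cantor.to_nat q -> p = q.
Proof. intro H. now rewrite <- (Cantor.cancel_of_to p), <- (Cantor.cancel_of_to q), H. Qed.

Definition blowup_code (y : blowup) : nat :=
  Cantor.to_nat (Z_to_nat (fst (bdir y)),
                 Cantor.to_nat (Z_to_nat (snd (bdir y)), Z_to_nat (blevel y))).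

Lemma blowup_code_inj y1 y2 : blowup_code y1 = blowup_code y2 -> y1 = y2.
Proof.
  unfold blowup_code. intro H. apply Cantor_to_nat_inj in H.
  pose proof (f_equal fst H) as H1. pose proof (f_equal snd H) as H23. cbn [fst snd] in H1, H23.
  apply Cantor_to_nat_inj in H23.
  pose proof (f_equal fst H23) as H2. pose proof (f_equal snd H23) as H3. cbn [fst snd] in H2, H3.
  apply Z_to_nat_inj in H1, H2, H3. apply blowup_eq; auto.
  destruct (bdir y1), (bdir y2). simpl in *. congruence.
Qed.

Definition blowup_lt (y1 y2 : blowup) : Prop :=
  angle_lt (bdir y1) (bdir y2) \/ (bdir y1 = bdir y2 /\ blevel y1 < blevel y2).

Lemma blowup_lt_irrefl y : ~ blowup_lt y y.
Proof. intros [h|[_ h]]; [eapply angle_lt_irrefl; eauto | lia]. Qed.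

Lemma blowup_lt_trans x y z : blowup_lt x y -> blowup_lt y z -> blowup_lt x z.
Proof.
  unfold blowup_lt. intros [h|[e h]] [h'|[e' h']].
  - left. eapply angle_lt_trans; eauto using bdir_primitive.
  - left. now rewrite <- e'.
  - left. now rewrite e.
  - right. split; [congruence | lia].
Qed.

Lemma blowup_lt_total x y : blowup_lt x y \/ x = y \/ blowup_lt y x.
Proof.
  unfold blowup_lt.
  destruct (angle_lt_total (bdir x) (bdir y) (bdir_primitive x) (bdir_primitive y)) as [h|[h|h]];
    auto.
  destruct (Z.lt_trichotomy (blevel x) (blevel y)) as [h'|[h'|h']]; auto.
  right; left. now apply blowup_eq.
Qed.

Definition Blowup : CountableOrder :=
  {| elt := blowup; olt := blowup_lt; code := blowup_code; code_inj := blowup_code_inj;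
     olt_irrefl := blowup_lt_irrefl; olt_trans := blowup_lt_trans;
     olt_total := blowup_lt_total; some_elt := mkblowup e1 0 primitive_e1 |}.

Section AffineLift.

Variables (A : M2) (v : Z*Z).
Hypothesis A_SL : inSL2Z A.

Definition affine_fwd (y : blowup) : blowup :=
  mkblowup (actV A (bdir y)) (blevel y + det2 (actV A (bdir y)) v)
    (primitive_actV A _ A_SL (bdir_primitive y)).

Definition affine_bwd (y : blowup) : blowup :=
  mkblowup (actV (M2inv A) (bdir y)) (blevel y - det2 (bdir y) v)
    (primitive_actV (M2inv A) _ (inSL2Z_inv A A_SL) (bdir_primitive y)).

Lemma affine_fwd_bwd y : affine_fwd (affine_bwd y) = y.
Proof.
  apply blowup_eq; unfold affine_fwd, affine_bwd; cbn -[actV det2]; fold (bdir y) (blevel y).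
  - now apply actV_inv_r.
  - rewrite actV_inv_r by auto. ring.
Qed.

Lemma affine_bwd_fwd y : affine_bwd (affine_fwd y) = y.
Proof.
  apply blowup_eq; unfold affine_fwd, affine_bwd; cbn -[actV det2]; fold (bdir y) (blevel y).
  - now apply actV_inv_l.
  - ring.
Qed.

Lemma wrap_cases p : wrap A p = 0 \/ wrap A p = 1.
Proof. unfold wrap. destruct angle_ltb; auto. Qed.

Lemma affine_lex k1 y1 k2 y2 : lexlt Blowup k1 y1 k2 y2 ->
  lexlt Blowup (k1 + wrap A (bdir y1)) (affine_fwd y1) (k2 + wrap A (bdir y2)) (affine_fwd y2).
Proof.
  unfold lexlt. simpl. unfold blowup_lt, affine_fwd. cbn -[actV det2 wrap].
  fold (bdir y1) (bdir y2) (blevel y1) (blevel y2).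
  pose proof (bdir_primitive y1) as P1. pose proof (bdir_primitive y2) as P2.
  intros [h|[<- h]].
  - destruct (Z.lt_total (k1 + wrap A (bdir y1)) (k2 + wrap A (bdir y2))) as [h'|[h'|h']];
      [now left | right; split; auto; left |
       exfalso; destruct (wrap_cases (bdir y1)), (wrap_cases (bdir y2)); lia].
    assert (wrap A (bdir y1) = 1 /\ wrap A (bdir y2) = 0) as [j1 j2]
      by (destruct (wrap_cases (bdir y1)), (wrap_cases (bdir y2)); lia).
    unfold wrap in j1, j2.
    destruct (angle_ltb (actV A (bdir y1)) (actV A e1)) eqn:E1; [|discriminate].
    destruct (angle_ltb (actV A (bdir y2)) (actV A e1)) eqn:E2; [discriminate|].
    pose proof (primitive_actV A _ A_SL P1). pose proof (primitive_actV A _ A_SL P2).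
    pose proof (primitive_actV A _ A_SL primitive_e1).
    destruct (angle_lt_total (actV A e1) (actV A (bdir y2))) as [t|[<-|t]]; auto;
      [eapply angle_lt_trans; eauto | unfold angle_lt in t; congruence].
  - destruct h as [h|[e h]].
    + destruct (wrap_lex A (bdir y1) (bdir y2) A_SL P1 P2 h) as [h'|[h' h'']];
        [left; lia | right; split; [lia | now left]].
    + rewrite e. right. split; auto. right. split; auto. lia.
Qed.

Definition affine_lift : lex_aut Blowup :=
  Build_lex_aut Blowup (fun y => wrap A (bdir y)) affine_fwd affine_bwd
    affine_fwd_bwd affine_bwd_fwd affine_lex.

Lemma affine_lift_lmap y :
  bdir (lmap affine_lift y) = actV A (bdir y) /\
  blevel (lmap affine_lift y) = blevel y + det2 (actV A (bdir y)) v.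
Proof. split; reflexivity. Qed.

End AffineLift.

(** * The action of SL(2,Z) ⋉ Z² on the circle *)

Open Scope R_scope.

Lemma continuity_incr_surj (f : R -> R) :
  (forall x y, x < y -> f x < f y) -> (forall z, exists x, f x = z) -> continuity f.
Proof.
  intros Hm Hs x. unfold continuity_pt, continue_in, limit1_in, limit_in. intros e He.
  destruct (Hs (f x - e)) as [x1 E1], (Hs (f x + e)) as [x2 E2].
  assert (x1 < x)
    by (destruct (Rlt_le_dec x1 x) as [|[h|h]]; [auto | apply Hm in h; lra | subst; lra]).
  assert (x < x2)
    by (destruct (Rlt_le_dec x x2) as [|[h|h]]; [auto | apply Hm in h; lra | subst; lra]).
  exists (Rmin (x - x1) (x2 - x)). split; [apply Rmin_pos; lra|].
  intros y [_ Hy]. simpl in *. unfold R_dist in *.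
  assert (x1 < y < x2) by (unfold Rmin in Hy; destruct Rle_dec; apply Rabs_def2 in Hy; lra).
  assert (f x1 < f y) by (apply Hm; lra). assert (f y < f x2) by (apply Hm; lra).
  apply Rabs_def1; lra.
Qed.

Definition circle_lex (g : M2 * (Z * Z)) : lex_aut Blowup :=
  match excluded_middle_informative (inSL2Z (fst g)) with
  | left H => affine_lift (fst g) (snd g) H
  | right _ => lex_id Blowup
  end.

Lemma circle_lex_lmap g y : inSL2Z (fst g) ->
  bdir (lmap (circle_lex g) y) = actV (fst g) (bdir y) /\
  blevel (lmap (circle_lex g) y) = (blevel y + det2 (actV (fst g) (bdir y)) (snd g))%Z.
Proof.
  intro H. unfold circle_lex. destruct excluded_middle_informative; [|contradiction].
  apply affine_lift_lmap.
Qed.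

Lemma circle_lex_sdmul g h : inSL2Z (fst g) -> inSL2Z (fst h) ->
  forall y,
  lmap (circle_lex (sdmul g h)) y = lmap (lex_comp Blowup (circle_lex g) (circle_lex h)) y.
Proof.
  intros Hg Hh y. assert (Hgh : inSL2Z (fst (sdmul g h))) by now apply inSL2Z_mul.
  destruct (circle_lex_lmap _ y Hgh) as [E1 E2], (circle_lex_lmap _ y Hh) as [F1 F2],
    (circle_lex_lmap _ (lmap (circle_lex h) y) Hg) as [G1 G2].
  simpl. apply blowup_eq.
  - rewrite E1, G1, F1. apply actV_mul.
  - rewrite E2, G2, F1, F2. destruct g as [A v], h as [B w]. unfold sdmul in *. simpl in *.
    rewrite actV_mul, det2_Vadd, det2_actV by auto. lia.
Qed.

Lemma circle_lex_faithful g h : inSL2Z (fst g) -> inSL2Z (fst h) ->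
  (forall y, lmap (circle_lex g) y = lmap (circle_lex h) y) -> g = h.
Proof.
  intros Hg Hh H. destruct g as [A v], h as [B w]. apply affine_eq_of_actV; auto.
  intros p Hp. set (y := mkblowup p 0 Hp). specialize (H y).
  destruct (circle_lex_lmap _ y Hg) as [E1 E2], (circle_lex_lmap _ y Hh) as [F1 F2].
  rewrite H in E1, E2. change (bdir y) with p in *. simpl in *. split; [congruence | lia].
Qed.

Definition circle_action (g : M2 * (Z * Z)) (x : R) : R :=
  realize Blowup (circle_lex g) (x * total_mass Blowup) / total_mass Blowup.

Lemma circle_action_realize g t :
  circle_action g (t / total_mass Blowup) * total_mass Blowup = realize Blowup (circle_lex g) t.
Proof.
  pose proof (total_mass_pos Blowup). unfold circle_action.
  replace (t / total_mass Blowup * total_mass Blowup) with t by (field; lra). field; lra.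
Qed.

Lemma circle_action_realize_mul g x :
  circle_action g x * total_mass Blowup = realize Blowup (circle_lex g) (x * total_mass Blowup).
Proof.
  pose proof (total_mass_pos Blowup). unfold circle_action. field. lra.
Qed.

Lemma circle_action_incr g x y : x < y -> circle_action g x < circle_action g y.
Proof.
  intro H. pose proof (total_mass_pos Blowup). unfold circle_action, Rdiv.
  apply Rmult_lt_compat_r; [now apply Rinv_0_lt_compat|]. apply realize_incr. nra.
Qed.

Lemma circle_action_surj g z : exists x, circle_action g x = z.
Proof.
  pose proof (total_mass_pos Blowup).
  exists (realize Blowup (lex_inv Blowup (circle_lex g)) (z * total_mass Blowup)
          / total_mass Blowup).
  apply (Rmult_eq_reg_r (total_mass Blowup)); [|lra].
  rewrite circle_action_realize, realize_inv. reflexivity.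
Qed.

Lemma circle_lift_circle_action g : circle_lift (circle_action g).
Proof.
  pose proof (total_mass_pos Blowup). split; [|split].
  - apply continuity_incr_surj; [apply circle_action_incr | apply circle_action_surj].
  - apply circle_action_incr.
  - intro x. unfold circle_action.
    replace ((x + 1) * total_mass Blowup) with (x * total_mass Blowup + IZR 1 * total_mass Blowup)
      by (simpl; ring).
    rewrite realize_shift. simpl. field. lra.
Qed.

Lemma circle_embedding : exists phi : M2 * (Z * Z) -> (R -> R),
  (forall g, inSL2Z (fst g) -> circle_lift (phi g)) /\
  (forall g h, inSL2Z (fst g) -> inSL2Z (fst h) ->
     same_circle_map (phi (sdmul g h)) (fun x => phi g (phi h x))) /\
  (forall g h, inSL2Z (fst g) -> inSL2Z (fst h) -> same_circle_map (phi g) (phi h) -> g = h).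
Proof.
  exists circle_action. pose proof (total_mass_pos Blowup) as HM. split; [|split].
  - intros; apply circle_lift_circle_action.
  - intros g h Hg Hh.
    destruct (realize_same_map Blowup _ _ (circle_lex_sdmul g h Hg Hh)) as [e He].
    exists e. intro x.
    apply (Rmult_eq_reg_r (total_mass Blowup)); [|lra].
    rewrite Rmult_plus_distr_r, !circle_action_realize_mul, He, realize_comp.
    rewrite <- (circle_action_realize_mul h x). ring.
  - intros g h Hg Hh [k Hk]. apply circle_lex_faithful; auto.
    assert (E : forall t, realize Blowup (circle_lex g) t
                          = realize Blowup (lex_comp Blowup (lex_shift Blowup k) (circle_lex h)) t).
    { intro t. rewrite realize_comp, realize_lex_shift, <- !circle_action_realize, Hk. ring. }
    intro y. apply (realize_faithful Blowup _ _ E y).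
Qed.

(** * Words in a free group *)

#[export] Instance lex_eq_Equivalence (Y : CountableOrder) : Equivalence (lex_eq Y).
Proof. split; [exact (lex_eq_refl Y) | exact (lex_eq_sym Y) | exact (lex_eq_trans Y)]. Qed.

#[export] Instance lex_comp_Proper (Y : CountableOrder) :
  Proper (lex_eq Y ==> lex_eq Y ==> lex_eq Y) (lex_comp Y).
Proof. intros s s' Hs u u' Hu. now apply lex_eq_comp. Qed.

Open Scope Z_scope.

Definition letter_inv (l : letter) : letter := (fst l, negb (snd l)).
Definition word_inv (w : list letter) : list letter := rev (map letter_inv w).
Definition cancels (l l' : letter) : bool :=
  Bool.eqb (fst l) (fst l') && negb (Bool.eqb (snd l) (snd l')).

Fixpoint reduce (w : list letter) : list letter :=
  match w with
  | nil => nil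
  | l :: w' => match reduce w' with
               | l' :: r => if cancels l l' then r else l :: l' :: r
               | nil => [l]
               end
  end.

Lemma reduced_tail l w : reduced (l :: w) -> reduced w.
Proof. destruct w; simpl; tauto. Qed.

Lemma reduce_reduced w : reduced (reduce w).
Proof.
  induction w as [|l w IH]; simpl; auto.
  destruct (reduce w) as [|l' r] eqn:E; simpl; auto.
  destruct (cancels l l') eqn:C; [eapply reduced_tail; eauto|].
  split; auto. intros [h1 h2]. unfold cancels in C. rewrite h1, Bool.eqb_reflx in C.
  destruct (snd l), (snd l'); simpl in C; discriminate || now apply h2.
Qed.

Lemma cancels_letter_inv l l' : cancels l l' = true -> l' = letter_inv l.
Proof. destruct l as [[] []], l' as [[] []]; unfold cancels, letter_inv; simpl; congruence. Qed.

Lemma word_inv_cons l w : word_inv (l :: w) = word_inv w ++ [letter_inv l].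
Proof. reflexivity. Qed.

Section MatrixWords.

Variables a b : M2.
Hypothesis a_SL : inSL2Z a.
Hypothesis b_SL : inSL2Z b.

Lemma eval_letter_inv_r l : M2mul (eval_letter a b l) (eval_letter a b (letter_inv l)) = M2one.
Proof.
  destruct l as [[] []]; cbn [eval_letter letter_inv fst snd negb]; auto using M2inv_l, M2inv_r.
Qed.

Lemma eval_word_app u v : eval_word a b (u ++ v) = M2mul (eval_word a b u) (eval_word a b v).
Proof. induction u as [|l u IH]; simpl; [now rewrite M2mul_1l | now rewrite IH, M2mul_assoc]. Qed.

Lemma eval_word_reduce w : eval_word a b (reduce w) = eval_word a b w.
Proof.
  induction w as [|l w IH]; simpl; auto. rewrite <- IH.
  destruct (reduce w) as [|l' r]; auto.
  destruct (cancels l l') eqn:C; auto. apply cancels_letter_inv in C as ->. simpl.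
  now rewrite M2mul_assoc, eval_letter_inv_r, M2mul_1l.
Qed.

Lemma eval_word_inv_r w : M2mul (eval_word a b w) (eval_word a b (word_inv w)) = M2one.
Proof.
  induction w as [|l w IH]; simpl; [apply M2mul_1l|].
  rewrite word_inv_cons, eval_word_app. simpl. rewrite M2mul_1r, <- M2mul_assoc,
    (M2mul_assoc (eval_word a b w)), IH, M2mul_1l. apply eval_letter_inv_r.
Qed.

End MatrixWords.

Section WordLex.

Variable Y : CountableOrder.
Variables Xa Xb : lex_aut Y.

Definition letter_lex (l : letter) : lex_aut Y :=
  let x := if fst l then Xb else Xa in if snd l then lex_inv Y x else x.

Fixpoint word_lex (w : list letter) : lex_aut Y :=
  match w with
  | nil => lex_id Y
  | l :: w' => lex_comp Y (letter_lex l) (word_lex w')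
  end.

Lemma word_lex_app u v : lex_eq Y (word_lex (u ++ v)) (lex_comp Y (word_lex u) (word_lex v)).
Proof.
  induction u as [|l u IH]; simpl; [now rewrite lex_comp_id_l|].
  now rewrite IH, lex_comp_assoc.
Qed.

Lemma letter_lex_inv_l l :
  lex_eq Y (lex_comp Y (letter_lex (letter_inv l)) (letter_lex l)) (lex_id Y).
Proof. destruct l as [[] []]; simpl; apply lex_comp_inv_l || apply lex_comp_inv_r. Qed.

Lemma letter_lex_inv_r l :
  lex_eq Y (lex_comp Y (letter_lex l) (letter_lex (letter_inv l))) (lex_id Y).
Proof. destruct l as [[] []]; simpl; apply lex_comp_inv_l || apply lex_comp_inv_r. Qed.

Lemma word_lex_reduce w : lex_eq Y (word_lex (reduce w)) (word_lex w).
Proof.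
  induction w as [|l w IH]; simpl; [reflexivity|]. rewrite <- IH.
  destruct (reduce w) as [|l' r]; [reflexivity|].
  destruct (cancels l l') eqn:C; [|reflexivity]. apply cancels_letter_inv in C as ->. simpl.
  now rewrite lex_comp_assoc, letter_lex_inv_r, lex_comp_id_l.
Qed.

Lemma word_lex_inv_l w : lex_eq Y (lex_comp Y (word_lex (word_inv w)) (word_lex w)) (lex_id Y).
Proof.
  induction w as [|l w IH]; simpl; [apply lex_comp_id_l|].
  rewrite word_inv_cons, word_lex_app. simpl.
  now rewrite lex_comp_id_r, <- lex_comp_assoc, (lex_comp_assoc _ _ (letter_lex l)),
    letter_lex_inv_l, lex_comp_id_l.
Qed.

(* If [a] and [b] freely generate a group, [a ↦ Xa], [b ↦ Xb] extends to it. *)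
Lemma word_lex_welldef a b w1 w2 : inSL2Z a -> inSL2Z b ->
  (forall w, w <> nil -> reduced w -> eval_word a b w <> M2one) ->
  eval_word a b w1 = eval_word a b w2 -> lex_eq Y (word_lex w1) (word_lex w2).
Proof.
  intros Ha Hb Hfree E. set (z := w1 ++ word_inv w2).
  assert (Rz : reduce z = nil).
  { destruct (reduce z) as [|l r] eqn:R; auto. exfalso. apply (Hfree (reduce z)).
    - now rewrite R.
    - apply reduce_reduced.
    - unfold z. rewrite eval_word_reduce, eval_word_app, E by auto. now apply eval_word_inv_r. }
  assert (Hz : lex_eq Y (word_lex z) (lex_id Y)) by (now rewrite <- word_lex_reduce, Rz).
  rewrite <- (lex_comp_id_r _ (word_lex w1)), <- (word_lex_inv_l w2), lex_comp_assoc,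
    <- word_lex_app. fold z. now rewrite Hz, lex_comp_id_l.
Qed.

End WordLex.

(** * The action of F₂ ⋉ Z² on the interval *)

Open Scope R_scope.

Definition squash (x : R) : R := (1 + x / (1 + Rabs x)) / 2.
Definition unsquash (u : R) : R := (2 * u - 1) / (1 - Rabs (2 * u - 1)).

Lemma squash_range x : 0 < squash x < 1.
Proof.
  unfold squash. pose proof (Rabs_pos x).
  assert (Hlt : Rabs (x / (1 + Rabs x)) < 1).
  { unfold Rdiv. rewrite Rabs_mult, Rabs_inv, (Rabs_pos_eq (1 + Rabs x)) by lra.
    apply (Rmult_lt_reg_r (1 + Rabs x)). lra.
    rewrite Rmult_assoc, Rinv_l, Rmult_1_r, Rmult_1_l by lra. lra. }
  apply Rabs_def2 in Hlt. lra.
Qed.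

Lemma div_one_plus_abs_incr x y : x < y -> x / (1 + Rabs x) < y / (1 + Rabs y).
Proof.
  intro H. pose proof (Rabs_pos x). pose proof (Rabs_pos y).
  apply (Rmult_lt_reg_r ((1 + Rabs x) * (1 + Rabs y))). nra.
  replace (x / (1 + Rabs x) * ((1 + Rabs x) * (1 + Rabs y))) with (x * (1 + Rabs y))
    by (field; lra).
  replace (y / (1 + Rabs y) * ((1 + Rabs x) * (1 + Rabs y))) with (y * (1 + Rabs x))
    by (field; lra).
  unfold Rabs. destruct Rcase_abs, Rcase_abs; nra.
Qed.

Lemma squash_incr x y : x < y -> squash x < squash y.
Proof. intro H. unfold squash. apply div_one_plus_abs_incr in H. lra. Qed.

Lemma unsquash_squash x : unsquash (squash x) = x.
Proof.
  unfold unsquash, squash. pose proof (Rabs_pos x).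
  replace (2 * ((1 + x / (1 + Rabs x)) / 2) - 1) with (x / (1 + Rabs x)) by (field; lra).
  destruct (Rle_lt_dec 0 x) as [h|h].
  - rewrite (Rabs_pos_eq x) by lra.
    assert (0 <= x / (1 + x)) by (apply div_nonneg; lra).
    rewrite (Rabs_pos_eq (x / (1 + x))) by lra.
    replace (1 - x / (1 + x)) with (/ (1 + x)) by (field; lra). field. lra.
  - rewrite (Rabs_left x) by lra.
    assert (x / (1 + - x) < 0).
    { unfold Rdiv. assert (0 < / (1 + - x)) by (apply Rinv_0_lt_compat; lra). nra. }
    rewrite (Rabs_left (x / (1 + - x))) by lra.
    replace (1 - - (x / (1 + - x))) with (/ (1 + - x)) by (field; lra). field. lra.
Qed.

Lemma squash_unsquash u : 0 < u < 1 -> squash (unsquash u) = u.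
Proof.
  intro Hu. unfold unsquash, squash. set (z := 2 * u - 1).
  assert (Hz : -1 < z < 1) by (unfold z; lra).
  replace u with ((1 + z) / 2) by (unfold z; field). f_equal. f_equal.
  destruct (Rle_lt_dec 0 z) as [h|h].
  - rewrite (Rabs_pos_eq z) by lra.
    assert (0 <= z / (1 - z)) by (apply div_nonneg; lra).
    rewrite (Rabs_pos_eq (z / (1 - z))) by lra. field. lra.
  - rewrite (Rabs_left z) by lra.
    assert (z / (1 - - z) < 0).
    { unfold Rdiv. assert (0 < / (1 - - z)) by (apply Rinv_0_lt_compat; lra). nra. }
    rewrite (Rabs_left (z / (1 - - z))) by lra. field. lra.
Qed.

Lemma squash_inj x y : squash x = squash y -> x = y.
Proof. intro H. rewrite <- (unsquash_squash x), <- (unsquash_squash y), H. auto. Qed.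

Lemma unsquash_incr u v : 0 < u < 1 -> 0 < v < 1 -> u < v -> unsquash u < unsquash v.
Proof.
  intros Hu Hv H. destruct (Rlt_le_dec (unsquash u) (unsquash v)) as [h|h]; auto.
  exfalso. destruct h as [h|h]. apply squash_incr in h. rewrite !squash_unsquash in h; auto. lra.
  apply (f_equal squash) in h. rewrite !squash_unsquash in h; auto. lra.
Qed.

Lemma interval_continuity_incr_surj (f : R -> R) :
  (forall x, inI x -> inI (f x)) ->
  (forall y, inI y -> exists x, inI x /\ f x = y) ->
  (forall x y, inI x -> inI y -> x < y -> f x < f y) ->
  (forall x, inI x -> forall eps, eps > 0 -> exists delta, delta > 0 /\
      forall y, inI y -> Rabs (y - x) < delta -> Rabs (f y - f x) < eps).
Proof.
  intros Hr Hs Hm x Hx eps He.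
  assert (Hle : forall a b, inI a -> inI b -> f a < f b -> a < b).
  { intros a b Ha Hb H. destruct (Rlt_le_dec a b) as [h|h]; auto. destruct h as [h|h].
    apply (Hm b a) in h; auto. lra. subst. lra. }
  assert (L : exists d1, d1 > 0 /\ forall y, inI y -> x - d1 < y -> f x - eps < f y).
  { destruct (Rlt_le_dec (f x - eps) 0) as [h|h].
    - exists 1. split. lra. intros y Hy _. pose proof (Hr y Hy). unfold inI in *. lra.
    - destruct (Hs (f x - eps)) as [x1 [Hx1 E1]]. pose proof (Hr x Hx). unfold inI in *. lra.
      assert (x1 < x) by (apply Hle; auto; lra).
      exists (x - x1). split. lra. intros y Hy Hy'.
      rewrite <- E1. apply Hm; auto. lra. }
  assert (U : exists d2, d2 > 0 /\ forall y, inI y -> y < x + d2 -> f y < f x + eps).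
  { destruct (Rlt_le_dec 1 (f x + eps)) as [h|h].
    - exists 1. split. lra. intros y Hy _. pose proof (Hr y Hy). unfold inI in *. lra.
    - destruct (Hs (f x + eps)) as [x2 [Hx2 E2]]. pose proof (Hr x Hx). unfold inI in *. lra.
      assert (x < x2) by (apply Hle; auto; lra).
      exists (x2 - x). split. lra. intros y Hy Hy'.
      rewrite <- E2. apply Hm; auto. lra. }
  destruct L as [d1 [Hd1 L]]. destruct U as [d2 [Hd2 U]].
  exists (Rmin d1 d2). split. apply Rmin_pos; lra.
  intros y Hy Hd. apply Rabs_def2 in Hd. destruct Hd as [Hd1' Hd2'].
  assert (Hm1 : Rmin d1 d2 <= d1) by apply Rmin_l. assert (Hm2 : Rmin d1 d2 <= d2) by apply Rmin_r.
  destruct (Rlt_le_dec y x) as [h|h].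
  - assert (f y < f x) by (apply Hm; auto). specialize (L y Hy ltac:(lra)). apply Rabs_def1; lra.
  - destruct h as [h|h].
    + assert (f x < f y) by (apply Hm; auto). specialize (U y Hy ltac:(lra)). apply Rabs_def1; lra.
    + subst. rewrite Rminus_eq_0, Rabs_R0. lra.
Qed.


(* Conjugation by [squash] turns a homeomorphism of [R] into one of [(0, 1)], extended by
   fixing the endpoints. *)
Definition conj_interval (F : R -> R) (u : R) : R :=
  if Rlt_dec 0 u then if Rlt_dec u 1 then squash (F (unsquash u)) else u else u.

Lemma conj_interval_inner F u : 0 < u < 1 -> conj_interval F u = squash (F (unsquash u)).
Proof. intro H. unfold conj_interval. destruct Rlt_dec; [|lra]. destruct Rlt_dec; [auto | lra]. Qed.

Lemma conj_interval_0 F : conj_interval F 0 = 0.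
Proof. unfold conj_interval. destruct Rlt_dec; [lra | auto]. Qed.

Lemma conj_interval_1 F : conj_interval F 1 = 1.
Proof. unfold conj_interval. destruct Rlt_dec; [|lra]. destruct Rlt_dec; [lra | auto]. Qed.

Lemma conj_interval_ext F G :
  (forall t, F t = G t) -> forall u, conj_interval F u = conj_interval G u.
Proof. intros H u. unfold conj_interval. now rewrite H. Qed.

Lemma inI_cases u : inI u -> u = 0 \/ u = 1 \/ 0 < u < 1.
Proof. unfold inI. lra. Qed.

Lemma conj_interval_inI F u : inI u -> inI (conj_interval F u).
Proof.
  intro Hu. unfold inI. destruct (inI_cases u Hu) as [->|[->|h]].
  - rewrite conj_interval_0. lra.
  - rewrite conj_interval_1. lra.
  - rewrite conj_interval_inner by auto. pose proof (squash_range (F (unsquash u))). lra.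
Qed.

Lemma conj_interval_comp F G u : inI u ->
  conj_interval (fun t => F (G t)) u = conj_interval F (conj_interval G u).
Proof.
  intro Hu. destruct (inI_cases u Hu) as [->|[->|h]].
  - now rewrite !conj_interval_0.
  - now rewrite !conj_interval_1.
  - pose proof (squash_range (G (unsquash u))) as HG.
    now rewrite (conj_interval_inner G u h), (conj_interval_inner F _ HG),
      (conj_interval_inner _ u h), unsquash_squash.
Qed.

Lemma conj_interval_inj F G : (forall u, inI u -> conj_interval F u = conj_interval G u) ->
  forall t, F t = G t.
Proof.
  intros H t. pose proof (squash_range t). apply squash_inj.
  specialize (H (squash t) ltac:(unfold inI; lra)).
  now rewrite !conj_interval_inner, unsquash_squash in H.
Qed.

Lemma interval_homeo_conj F Finv :
  (forall x y, x < y -> F x < F y) -> (forall t, F (Finv t) = t) ->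
  interval_homeo (conj_interval F).
Proof.
  intros Hincr Hinv.
  assert (Honto : forall y, inI y -> exists x, inI x /\ conj_interval F x = y).
  { intros y Hy. destruct (inI_cases y Hy) as [->|[->|h]].
    - exists 0. split; [unfold inI; lra | apply conj_interval_0].
    - exists 1. split; [unfold inI; lra | apply conj_interval_1].
    - pose proof (squash_range (Finv (unsquash y))).
      exists (squash (Finv (unsquash y))). split; [unfold inI; lra|].
      rewrite conj_interval_inner, unsquash_squash, Hinv by auto. now apply squash_unsquash. }
  assert (Hmono : forall x y, inI x -> inI y -> x < y -> conj_interval F x < conj_interval F y).
  { intros x y Hx Hy Hxy.
    destruct (inI_cases x Hx) as [->|[->|hx]], (inI_cases y Hy) as [->|[->|hy]]; try lra;
      rewrite ?conj_interval_0, ?conj_interval_1, ?conj_interval_inner by auto; try lra;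
      try (pose proof (squash_range (F (unsquash y))); lra);
      try (pose proof (squash_range (F (unsquash x))); lra).
    apply squash_incr, Hincr, unsquash_incr; auto. }
  split; [|split; [|split]]; auto using conj_interval_inI.
  apply interval_continuity_incr_surj; auto using conj_interval_inI.
Qed.

Open Scope Z_scope.

(* The lifts of linear maps: their degree only depends on the direction, so they commute
   with the lifts of translations. *)
Definition lifts_linear (s : lex_aut Blowup) (A : M2) : Prop :=
  (forall y, bdir (lmap s y) = actV A (bdir y) /\ blevel (lmap s y) = blevel y) /\
  (forall y y', bdir y = bdir y' -> ldeg s y = ldeg s y').

Lemma affine_lift_linear A HA : lifts_linear (affine_lift A (0, 0) HA) A.
Proof.
  split.
  - intro y. destruct (affine_lift_lmap A (0, 0) HA y) as [-> ->]. split; auto.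
    unfold det2; simpl. ring.
  - intros y y' E. simpl. now rewrite E.
Qed.

Lemma lex_id_linear : lifts_linear (lex_id Blowup) M2one.
Proof.
  split; [|auto]. intro y. simpl. split; auto.
  destruct (bdir y) as [p1 p2]. unfold actV, M2one. cbn -[Z.mul Z.add]. f_equal; ring.
Qed.

Lemma lex_comp_linear s u A B :
  lifts_linear s A -> lifts_linear u B -> lifts_linear (lex_comp Blowup s u) (M2mul A B).
Proof.
  intros [Hs1 Hs2] [Hu1 Hu2]. split.
  - intro y. simpl. destruct (Hu1 y) as [e1 e2], (Hs1 (lmap u y)) as [f1 f2].
    now rewrite f1, f2, e1, e2, actV_mul.
  - intros y y' E. simpl. rewrite (Hu2 y y' E). f_equal. apply Hs2.
    destruct (Hu1 y) as [e1 _], (Hu1 y') as [e1' _]. congruence.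
Qed.

Lemma lex_inv_linear s A :
  inSL2Z A -> lifts_linear s A -> lifts_linear (lex_inv Blowup s) (M2inv A).
Proof.
  intros HA [Hs1 Hs2].
  assert (K : forall y, bdir (linv s y) = actV (M2inv A) (bdir y) /\ blevel (linv s y) = blevel y).
  { intro y. destruct (Hs1 (linv s y)) as [e1 e2]. rewrite lmap_linv in e1, e2.
    rewrite e1, actV_inv_l; auto. }
  split; [apply K|]. intros y y' E. simpl. f_equal. apply Hs2.
  destruct (K y) as [e _], (K y') as [e' _]. congruence.
Qed.

Lemma lex_eq_linear s u A : lex_eq Blowup s u -> lifts_linear s A -> lifts_linear u A.
Proof.
  intros E [H1 H2]. split.
  - intro y. destruct (E y) as [<- _]. auto.
  - intros y y' Ey. destruct (E y) as [_ <-], (E y') as [_ <-]. auto.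
Qed.

Lemma word_lex_linear a b (Ha : inSL2Z a) (Hb : inSL2Z b) w :
  lifts_linear (word_lex Blowup (affine_lift a (0, 0) Ha) (affine_lift b (0, 0) Hb) w)
    (eval_word a b w).
Proof.
  induction w as [|[[] []] w IH]; cbn [word_lex eval_word letter_lex eval_letter fst snd];
    [apply lex_id_linear|..]; apply lex_comp_linear; auto using affine_lift_linear, lex_inv_linear.
Qed.

Definition translate_fwd (v : Z * Z) (y : blowup) : blowup :=
  mkblowup (bdir y) (blevel y + det2 (bdir y) v) (bdir_primitive y).

Definition translate_bwd (v : Z * Z) (y : blowup) : blowup :=
  mkblowup (bdir y) (blevel y - det2 (bdir y) v) (bdir_primitive y).

Lemma bdir_translate_fwd v y : bdir (translate_fwd v y) = bdir y.
Proof. reflexivity. Qed.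

Lemma blevel_translate_fwd v y : blevel (translate_fwd v y) = blevel y + det2 (bdir y) v.
Proof. reflexivity. Qed.

Lemma translate_fwd_bwd v y : translate_fwd v (translate_bwd v y) = y.
Proof. apply blowup_eq; unfold translate_fwd, translate_bwd; cbn; [reflexivity | lia]. Qed.

Lemma translate_bwd_fwd v y : translate_bwd v (translate_fwd v y) = y.
Proof. apply blowup_eq; unfold translate_fwd, translate_bwd; cbn; [reflexivity | lia]. Qed.

Lemma translate_lex v k1 y1 k2 y2 : lexlt Blowup k1 y1 k2 y2 ->
  lexlt Blowup (k1 + 0) (translate_fwd v y1) (k2 + 0) (translate_fwd v y2).
Proof.
  rewrite !Z.add_0_r. unfold lexlt, translate_fwd. simpl. unfold blowup_lt. cbn.
  intros [h|[<- [h|[e h]]]]; auto. right. split; auto. right. split; [exact e | rewrite e; lia].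
Qed.

Definition translation_lex (v : Z * Z) : lex_aut Blowup :=
  Build_lex_aut Blowup (fun _ => 0) (translate_fwd v) (translate_bwd v)
    (translate_fwd_bwd v) (translate_bwd_fwd v) (translate_lex v).

Section FreeLift.

Variables a b : M2.
Hypothesis a_SL : inSL2Z a.
Hypothesis b_SL : inSL2Z b.
Hypothesis free_ab : forall w, w <> nil -> reduced w -> eval_word a b w <> M2one.

Definition generated (A : M2) := exists w, A = eval_word a b w.

Let Xa := affine_lift a (0, 0) a_SL.
Let Xb := affine_lift b (0, 0) b_SL.

(* The lift to the line is a homomorphism because the generators of a free group can be
   lifted independently ([word_lex_welldef]). *)
Definition free_lift (A : M2) : lex_aut Blowup :=
  match excluded_middle_informative (generated A) with
  | left E => word_lex Blowup Xa Xb (proj1_sig (constructive_indefinite_description _ E))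
  | right _ => lex_id Blowup
  end.

Lemma free_lift_word A w :
  A = eval_word a b w -> lex_eq Blowup (free_lift A) (word_lex Blowup Xa Xb w).
Proof.
  intro E. unfold free_lift.
  destruct excluded_middle_informative as [E'|E']; [|exfalso; apply E'; now exists w].
  destruct constructive_indefinite_description as [w' Hw']. simpl.
  apply (word_lex_welldef Blowup Xa Xb a b); [exact a_SL | exact b_SL | exact free_ab | congruence].
Qed.

Lemma free_lift_linear A : generated A -> lifts_linear (free_lift A) A.
Proof.
  intros [w E]. apply (lex_eq_linear (word_lex Blowup Xa Xb w)).
  - symmetry. now apply free_lift_word.
  - rewrite E. apply word_lex_linear.
Qed.

Lemma free_lift_mul A B : generated A -> generated B ->
  lex_eq Blowup (free_lift (M2mul A B)) (lex_comp Blowup (free_lift A) (free_lift B)).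
Proof.
  intros [wA EA] [wB EB].
  rewrite (free_lift_word _ (wA ++ wB)) by (rewrite eval_word_app; congruence).
  now rewrite word_lex_app, (free_lift_word A wA EA), (free_lift_word B wB EB).
Qed.

Definition interval_lex (g : M2 * (Z * Z)) : lex_aut Blowup :=
  lex_comp Blowup (translation_lex (snd g)) (free_lift (fst g)).

Lemma interval_lex_lmap A v y : generated A ->
  bdir (lmap (interval_lex (A, v)) y) = actV A (bdir y) /\
  blevel (lmap (interval_lex (A, v)) y) = blevel y + det2 (actV A (bdir y)) v.
Proof.
  intro HA. destruct (free_lift_linear A HA) as [G1 _]. destruct (G1 y) as [e1 e2].
  simpl. now rewrite bdir_translate_fwd, blevel_translate_fwd, e1, e2.
Qed.

Lemma interval_lex_sdmul g h : inSL2Z (fst g) -> generated (fst g) -> generated (fst h) ->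
  lex_eq Blowup (interval_lex (sdmul g h)) (lex_comp Blowup (interval_lex g) (interval_lex h)).
Proof.
  destruct g as [A v], h as [B w]. simpl. intros HAs HA HB.
  assert (HAB : generated (M2mul A B)).
  { destruct HA as [wA EA], HB as [wB EB]. exists (wA ++ wB). rewrite eval_word_app; congruence. }
  intro y. split.
  - change (lmap (lex_comp Blowup (interval_lex (A, v)) (interval_lex (B, w))) y)
      with (lmap (interval_lex (A, v)) (lmap (interval_lex (B, w)) y)).
    destruct (interval_lex_lmap _ (Vadd v (actV A w)) y HAB) as [e1 e2],
      (interval_lex_lmap _ w y HB) as [f1 f2],
      (interval_lex_lmap _ v (lmap (interval_lex (B, w)) y) HA) as [g1 g2].
    unfold sdmul. cbn [fst snd]. apply blowup_eq.
    + now rewrite e1, g1, f1, actV_mul.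
    + rewrite e2, g2, f1, f2, actV_mul, det2_Vadd, det2_actV by auto. ring.
  - unfold sdmul, interval_lex. simpl. destruct (free_lift_mul A B HA HB y) as [_ ->]. simpl.
    destruct (free_lift_linear A HA) as [_ G].
    rewrite (G (translate_fwd w _) (lmap (free_lift B) y)) by apply bdir_translate_fwd. ring.
Qed.

Lemma interval_lex_faithful g h : inSL2Z (fst g) -> generated (fst g) -> generated (fst h) ->
  (forall y, lmap (interval_lex g) y = lmap (interval_lex h) y) -> g = h.
Proof.
  destruct g as [A v], h as [B w]. intros HAs HA HB H. cbn [fst] in *.
  apply affine_eq_of_actV; auto.
  intros p Hp. set (y := mkblowup p 0 Hp). specialize (H y).
  destruct (interval_lex_lmap A v y HA) as [E1 E2], (interval_lex_lmap B w y HB) as [F1 F2].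
  rewrite H in E1, E2. change (bdir y) with p in *. simpl in *. split; [congruence | lia].
Qed.

End FreeLift.

Open Scope R_scope.

Definition interval_action a b Ha Hb (g : M2 * (Z * Z)) : R -> R :=
  conj_interval (realize Blowup (interval_lex a b Ha Hb g)).

Lemma interval_embedding (H : M2 -> Prop) : is_subgroup H -> free_rank2 H ->
  exists psi : M2 * (Z * Z) -> (R -> R),
    (forall g, H (fst g) -> interval_homeo (psi g)) /\
    (forall g h, H (fst g) -> H (fst h) ->
       forall x, inI x -> psi (sdmul g h) x = psi g (psi h x)) /\
    (forall g h, H (fst g) -> H (fst h) -> (forall x, inI x -> psi g x = psi h x) -> g = h).
Proof.
  intros [HSL _] [a [b [Ha [Hb [Hgen Hfree]]]]].
  change (forall A, H A -> generated a b A) in Hgen.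
  exists (interval_action a b (HSL a Ha) (HSL b Hb)). split; [|split].
  - intros g _. unfold interval_action.
    apply (interval_homeo_conj _
             (realize Blowup (lex_inv Blowup (interval_lex a b (HSL a Ha) (HSL b Hb) g)))).
    + intros x y. apply realize_incr.
    + apply realize_inv.
  - intros g h Hg Hh x Hx. unfold interval_action. rewrite <- conj_interval_comp by auto.
    apply conj_interval_ext. intro t. rewrite <- realize_comp.
    apply realize_lex_eq, interval_lex_sdmul; auto.
  - intros g h Hg Hh E. apply (interval_lex_faithful a b (HSL a Ha) (HSL b Hb) Hfree); auto.
    intro y. apply (realize_faithful Blowup), (conj_interval_inj _ _ E).
Qed.

Theorem mainTheorem7 :
  (exists phi : M2 * (Z * Z) -> (R -> R),
     (forall g, inSL2Z (fst g) -> circle_lift (phi g)) /\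
     (forall g h, inSL2Z (fst g) -> inSL2Z (fst h) ->
        same_circle_map (phi (sdmul g h)) (fun x => phi g (phi h x))) /\
     (forall g h, inSL2Z (fst g) -> inSL2Z (fst h) ->
        same_circle_map (phi g) (phi h) -> g = h)) /\
  (forall H : M2 -> Prop, is_subgroup H -> finite_index H -> free_rank2 H ->
   exists psi : M2 * (Z * Z) -> (R -> R),
     (forall g, H (fst g) -> interval_homeo (psi g)) /\
     (forall g h, H (fst g) -> H (fst h) ->
        forall x, inI x -> psi (sdmul g h) x = psi g (psi h x)) /\
     (forall g h, H (fst g) -> H (fst h) ->
        (forall x, inI x -> psi g x = psi h x) -> g = h)).
Proof.
  split.
  - exact circle_embedding.
  - (* Finite index is not needed: every free subgroup of rank 2 embeds. *)
    intros H Hsub _ Hfree. exact (interval_embedding H Hsub Hfree).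
Qed.
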